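(* Let $D\subset\mathbb{C}$ be a domain, let $h$ be holomorphic on $D$ with $h'$ nowhere zero, and put $g(w)=1/h'(w)$, $w=x+iy$. Let $\varphi(x,y)=\operatorname{Re} h(w)$ and $\psi(x,y)=\frac{\operatorname{Re} g'(w)}{|g(w)|^2}$. Then $\psi$ depends only on $\varphi$ (i.e. the Jacobian $\frac{\partial(\varphi,\psi)}{\partial(x,y)}$ vanishes identically on $D$) if and only if $$g\,g''-(g')^2=c$$ on $D$ for some real constant $c$. *)

From Stdlib Require Import Reals ClassicalEpsilon.
From Coquelicot Require Import Coquelicot.
Open Scope R_scope.

Definition C_is_derive (f : C -> C) (z l : C) : Prop :=
  @is_derive C_AbsRing C_NormedModule f z l.

Definition holomorphic_on (D : C -> Prop) (f : C -> C) : Prop :=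
  forall z, D z -> exists l : C, C_is_derive f z l.

(* The complex derivative f'(z) (chosen by description; meaningful where
   f is complex differentiable, where it is unique). *)
Definition C_Derive (f : C -> C) (z : C) : C :=
  epsilon (inhabits (RtoC 0)) (fun l : C => C_is_derive f z l).

Definition connected_set (D : C -> Prop) : Prop :=
  forall U V : C -> Prop, @open C_UniformSpace U -> @open C_UniformSpace V ->
    (forall z, D z -> U z \/ V z) ->
    (exists z, D z /\ U z) -> (exists z, D z /\ V z) ->
    exists z, D z /\ U z /\ V z.

Definition is_domain (D : C -> Prop) : Prop :=
  @open C_UniformSpace D /\ connected_set D /\ exists z, D z.

Definition jacobian (phi psi : R -> R -> R) (x y : R) : R :=
  Derive (fun t => phi t y) x * Derive (fun t => psi x t) y
  - Derive (fun t => phi x t) y * Derive (fun t => psi t y) x.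

(* Writing [w = x + i y], the Cauchy-Riemann equations turn the Jacobian of
   [phi = Re h] and [psi = Re g' / |g| ^ 2], where [h' = 1 / g], into
   [- Im (g g'' - g' ^ 2) / |g| ^ 4].  Hence it vanishes identically iff the
   holomorphic function [g g'' - g' ^ 2] is real-valued, i.e. (on a connected
   open set, by Cauchy-Riemann again) a real constant.  The only analytic
   input is that the derivative of a holomorphic function is holomorphic
   (needed for [g'']); it is obtained from Goursat's theorem for rectangles
   through the Cauchy integral formula on squares. *)

From Stdlib Require Import Reals Lra ClassicalEpsilon FunctionalExtensionality.
From Coquelicot Require Import Coquelicot.
Open Scope R_scope.

Lemma C_is_derive_eps (f : C -> C) (z l : C) :
  C_is_derive f z l <->
  forall eps, 0 < eps -> exists del, 0 < del /\ forall w, Cmod (Cminus w z) < del ->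
    Cmod (Cminus (Cminus (f w) (f z)) (Cmult (Cminus w z) l)) <= eps * Cmod (Cminus w z).
Proof.
  split.
  - intros [_ H] eps Heps.
    destruct (H z (fun P HP => HP) (mkposreal eps Heps)) as [del Hdel].
    exists del. split; [apply cond_pos | exact Hdel].
  - intros H. split; [apply is_linear_scal_l |].
    intros x Hx.
    assert (z = x) as <- by
      (apply (@is_filter_lim_locally_unique C_AbsRing (AbsRing_NormedModule C_AbsRing)); exact Hx).
    intros eps. destruct (H eps (cond_pos eps)) as [del [Hdel Hd]].
    exists (mkposreal del Hdel). exact Hd.
Qed.

(* The same derivative seen through [C] as a normed module over itself,
   the setting of Coquelicot's product and chain rules. *)
Lemma C_is_derive_AbsRing (f : C -> C) (z l : C) :
  C_is_derive f z l <-> @is_derive C_AbsRing (AbsRing_NormedModule C_AbsRing) f z l.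
Proof.
  rewrite C_is_derive_eps. split.
  - intros H. split; [apply is_linear_scal_l |].
    intros x Hx.
    assert (z = x) as <- by
      (apply (@is_filter_lim_locally_unique C_AbsRing (AbsRing_NormedModule C_AbsRing)); exact Hx).
    intros eps. destruct (H eps (cond_pos eps)) as [del [Hdel Hd]].
    exists (mkposreal del Hdel). exact Hd.
  - intros [_ H] eps Heps.
    destruct (H z (fun P HP => HP) (mkposreal eps Heps)) as [del Hdel].
    exists del. split; [apply cond_pos | exact Hdel].
Qed.

Lemma C_is_derive_unique (f : C -> C) (z l1 l2 : C) :
  C_is_derive f z l1 -> C_is_derive f z l2 -> l1 = l2.
Proof.
  intros H1 H2. rewrite <- (is_C_derive_unique _ _ _ H1). exact (is_C_derive_unique _ _ _ H2).
Qed.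

Lemma C_Derive_correct (f : C -> C) (z l : C) :
  C_is_derive f z l -> C_is_derive f z (C_Derive f z).
Proof. intros H. unfold C_Derive. apply epsilon_spec. now exists l. Qed.

Lemma C_Derive_eq (f : C -> C) (z l : C) : C_is_derive f z l -> C_Derive f z = l.
Proof. intros H. exact (C_is_derive_unique _ _ _ _ (C_Derive_correct _ _ _ H) H). Qed.

Lemma C_is_derive_const (c z : C) : C_is_derive (fun _ => c) z (RtoC 0).
Proof. exact (@is_derive_const C_AbsRing C_NormedModule c z). Qed.

Lemma C_is_derive_id (z : C) : C_is_derive (fun w => w) z (RtoC 1).
Proof. apply C_is_derive_AbsRing. exact (@is_derive_id C_AbsRing z). Qed.

Lemma C_is_derive_plus (f g : C -> C) (z a b : C) :
  C_is_derive f z a -> C_is_derive g z b ->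
  C_is_derive (fun w => Cplus (f w) (g w)) z (Cplus a b).
Proof. exact (@is_derive_plus C_AbsRing C_NormedModule f g z a b). Qed.

Lemma C_is_derive_minus (f g : C -> C) (z a b : C) :
  C_is_derive f z a -> C_is_derive g z b ->
  C_is_derive (fun w => Cminus (f w) (g w)) z (Cminus a b).
Proof. exact (@is_derive_minus C_AbsRing C_NormedModule f g z a b). Qed.

Lemma C_is_derive_mult (f g : C -> C) (z a b : C) :
  C_is_derive f z a -> C_is_derive g z b ->
  C_is_derive (fun w => Cmult (f w) (g w)) z (Cplus (Cmult a (g z)) (Cmult (f z) b)).
Proof.
  rewrite !C_is_derive_AbsRing. intros Ha Hb.
  apply (@is_derive_mult C_AbsRing); [exact Ha | exact Hb | intros; apply Cmult_comm].
Qed.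

Lemma C_is_derive_comp (f g : C -> C) (z a b : C) :
  C_is_derive f (g z) a -> C_is_derive g z b ->
  C_is_derive (fun w => f (g w)) z (Cmult b a).
Proof.
  intros Ha Hb. apply C_is_derive_AbsRing in Hb.
  exact (@is_derive_comp C_AbsRing C_NormedModule f g z a b Ha Hb).
Qed.

Lemma C_is_derive_change (f : C -> C) (z l l' : C) :
  C_is_derive f z l -> l = l' -> C_is_derive f z l'.
Proof. now intros H <-. Qed.

Lemma C_is_derive_loc (f g : C -> C) (z l : C) (r : R) : 0 < r ->
  (forall w, Cmod (Cminus w z) < r -> f w = g w) ->
  C_is_derive f z l -> C_is_derive g z l.
Proof.
  rewrite !C_is_derive_eps. intros Hr E H eps Heps.
  destruct (H eps Heps) as [d [Hd Hf]].
  exists (Rmin d r). split; [now apply Rmin_pos |].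
  intros w Hw. rewrite <- (E w), <- (E z).
  - apply Hf. eapply Rlt_le_trans; [exact Hw | apply Rmin_l].
  - unfold Cminus. now rewrite Cplus_opp_r, Cmod_0.
  - eapply Rlt_le_trans; [exact Hw | apply Rmin_r].
Qed.

Lemma Cmod_Cminus_ge (a b : C) : Cmod a - Cmod b <= Cmod (Cminus a b).
Proof.
  pose proof (Cmod_triangle (Cminus a b) b).
  replace (Cplus (Cminus a b) b) with a in H by ring. lra.
Qed.

Lemma Cmod_Cminus_le (a b : C) : Cmod (Cminus a b) <= Cmod a + Cmod b.
Proof. unfold Cminus. rewrite <- (Cmod_opp b). apply Cmod_triangle. Qed.

Lemma Cmod_Cminus_sym (a b : C) : Cmod (Cminus a b) = Cmod (Cminus b a).
Proof. rewrite <- Cmod_opp. f_equal. ring. Qed.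

Lemma Cminus_neq_0 (a b : C) : a <> b -> Cminus a b <> RtoC 0.
Proof. intros H E. apply H. replace a with (Cplus (Cminus a b) b) by ring. rewrite E. ring. Qed.

Lemma C_is_derive_Cinv (w0 : C) : w0 <> RtoC 0 ->
  C_is_derive Cinv w0 (Copp (Cinv (Cmult w0 w0))).
Proof.
  intros Hw0. apply C_is_derive_eps. intros eps Heps.
  set (r := Cmod w0). assert (Hr : 0 < r) by now apply Cmod_gt_0.
  exists (Rmin (r / 2) (eps * r * r * r / 2)). split.
  { apply Rmin_pos; [lra |]. assert (0 < eps * r * r * r) by (repeat apply Rmult_lt_0_compat; lra). lra. }
  intros w Hw. set (m := Cmod (Cminus w w0)) in *.
  assert (Hm1 : m < r / 2) by (eapply Rlt_le_trans; [exact Hw | apply Rmin_l]).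
  assert (Hm2 : m < eps * r * r * r / 2) by (eapply Rlt_le_trans; [exact Hw | apply Rmin_r]).
  assert (Hwr : r / 2 <= Cmod w)
    by (pose proof (Cmod_Cminus_ge w0 w); rewrite Cmod_Cminus_sym in H; fold m r in H; lra).
  assert (Hwn : w <> RtoC 0) by (intros E; rewrite E, Cmod_0 in Hwr; lra).
  replace (Cminus (Cminus (Cinv w) (Cinv w0)) (Cmult (Cminus w w0) (Copp (Cinv (Cmult w0 w0)))))
    with (Cdiv (Cmult (Cminus w w0) (Cminus w w0)) (Cmult w (Cmult w0 w0))) by (field; auto).
  rewrite Cmod_div, !Cmod_mult by (repeat apply Cmult_neq_0; auto). fold m r.
  assert (0 <= m) by apply Cmod_ge_0.
  assert (0 < Cmod w * (r * r)) by (apply Rmult_lt_0_compat; nra).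
  apply Rmult_le_reg_r with (Cmod w * (r * r)); [assumption |].
  unfold Rdiv. rewrite Rmult_assoc, Rinv_l by lra.
  assert (m * m <= m * (eps * r * r * r / 2)) by (apply Rmult_le_compat_l; lra).
  assert (eps * m * (r / 2 * (r * r)) <= eps * m * (Cmod w * (r * r)))
    by (apply Rmult_le_compat_l; [nra | apply Rmult_le_compat_r; nra]).
  nra.
Qed.

Lemma C_is_derive_inv (f : C -> C) (z a : C) : C_is_derive f z a -> f z <> RtoC 0 ->
  C_is_derive (fun w => Cinv (f w)) z (Cmult a (Copp (Cinv (Cmult (f z) (f z))))).
Proof. intros Ha Hn. apply (C_is_derive_comp Cinv f); [now apply C_is_derive_Cinv | exact Ha]. Qed.

Definition C_continuous_at (f : C -> C) (z : C) : Prop :=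
  forall eps, 0 < eps -> exists del, 0 < del /\ forall w,
    Cmod (Cminus w z) < del -> Cmod (Cminus (f w) (f z)) < eps.

Lemma C_is_derive_continuous (f : C -> C) (z l : C) :
  C_is_derive f z l -> C_continuous_at f z.
Proof.
  rewrite C_is_derive_eps. intros H eps Heps.
  destruct (H 1 Rlt_0_1) as [d [Hd H1]].
  pose proof (Cmod_ge_0 l).
  exists (Rmin d (eps / (Cmod l + 2))). split.
  { apply Rmin_pos; [exact Hd | apply Rdiv_lt_0_compat; lra]. }
  intros w Hw. set (m := Cmod (Cminus w z)).
  assert (Hm : m * (Cmod l + 2) < eps).
  { apply (Rmult_lt_reg_r (/ (Cmod l + 2))); [apply Rinv_0_lt_compat; lra |].
    rewrite Rmult_assoc, Rinv_r, Rmult_1_r by lra.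
    eapply Rlt_le_trans; [exact Hw | apply Rmin_r]. }
  specialize (H1 w (Rlt_le_trans _ _ _ Hw (Rmin_l _ _))). fold m in H1.
  replace (Cminus (f w) (f z)) with
    (Cplus (Cminus (Cminus (f w) (f z)) (Cmult (Cminus w z) l)) (Cmult (Cminus w z) l)) by ring.
  eapply Rle_lt_trans; [apply Cmod_triangle |]. rewrite Cmod_mult. fold m.
  assert (0 <= m) by apply Cmod_ge_0. nra.
Qed.

Lemma C_continuous_const (c z : C) : C_continuous_at (fun _ => c) z.
Proof. exact (C_is_derive_continuous _ _ _ (C_is_derive_const c z)). Qed.

Lemma C_continuous_plus (f g : C -> C) (z : C) :
  C_continuous_at f z -> C_continuous_at g z -> C_continuous_at (fun w => Cplus (f w) (g w)) z.
Proof.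
  intros Hf Hg eps Heps.
  destruct (Hf (eps / 2)) as [d1 [Hd1 H1]]; [lra |].
  destruct (Hg (eps / 2)) as [d2 [Hd2 H2]]; [lra |].
  exists (Rmin d1 d2). split; [now apply Rmin_pos |]. intros w Hw.
  specialize (H1 w (Rlt_le_trans _ _ _ Hw (Rmin_l _ _))).
  specialize (H2 w (Rlt_le_trans _ _ _ Hw (Rmin_r _ _))).
  replace (Cminus (Cplus (f w) (g w)) (Cplus (f z) (g z)))
    with (Cplus (Cminus (f w) (f z)) (Cminus (g w) (g z))) by ring.
  eapply Rle_lt_trans; [apply Cmod_triangle | lra].
Qed.

Lemma C_continuous_mult (f g : C -> C) (z : C) :
  C_continuous_at f z -> C_continuous_at g z -> C_continuous_at (fun w => Cmult (f w) (g w)) z.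
Proof.
  intros Hf Hg eps Heps.
  set (A := Cmod (f z) + 1). set (B := Cmod (g z) + 1).
  assert (HA : 1 <= A) by (unfold A; pose proof (Cmod_ge_0 (f z)); lra).
  assert (HB : 1 <= B) by (unfold B; pose proof (Cmod_ge_0 (g z)); lra).
  destruct (Hf (eps / (2 * B))) as [d1 [Hd1 H1]]; [apply Rdiv_lt_0_compat; lra |].
  destruct (Hg (Rmin 1 (eps / (2 * A)))) as [d2 [Hd2 H2]].
  { apply Rmin_pos; [lra | apply Rdiv_lt_0_compat; lra]. }
  exists (Rmin d1 d2). split; [now apply Rmin_pos |]. intros w Hw.
  specialize (H1 w (Rlt_le_trans _ _ _ Hw (Rmin_l _ _))).
  specialize (H2 w (Rlt_le_trans _ _ _ Hw (Rmin_r _ _))).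
  set (X := Cmod (Cminus (f w) (f z))) in *. set (W := Cmod (Cminus (g w) (g z))) in *.
  assert (HW1 : W < 1) by (eapply Rlt_le_trans; [exact H2 | apply Rmin_l]).
  assert (HW2 : W * (2 * A) < eps).
  { apply (Rmult_lt_reg_r (/ (2 * A))); [apply Rinv_0_lt_compat; lra |].
    rewrite Rmult_assoc, Rinv_r, Rmult_1_r by lra. eapply Rlt_le_trans; [exact H2 | apply Rmin_r]. }
  assert (HX : X * (2 * B) < eps).
  { apply (Rmult_lt_reg_r (/ (2 * B))); [apply Rinv_0_lt_compat; lra |].
    now rewrite Rmult_assoc, Rinv_r, Rmult_1_r by lra. }
  assert (Hgw : Cmod (g w) <= B).
  { replace (g w) with (Cplus (Cminus (g w) (g z)) (g z)) by ring.
    eapply Rle_trans; [apply Cmod_triangle | unfold B; fold W; lra]. }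
  replace (Cminus (Cmult (f w) (g w)) (Cmult (f z) (g z))) with
    (Cplus (Cmult (Cminus (f w) (f z)) (g w)) (Cmult (f z) (Cminus (g w) (g z)))) by ring.
  eapply Rle_lt_trans; [apply Cmod_triangle |]. rewrite !Cmod_mult. fold X W.
  assert (0 <= X) by apply Cmod_ge_0. assert (0 <= W) by apply Cmod_ge_0.
  assert (0 <= Cmod (f z)) by apply Cmod_ge_0.
  assert (X * Cmod (g w) <= X * B) by (apply Rmult_le_compat_l; lra).
  assert (Cmod (f z) * W <= A * W) by (apply Rmult_le_compat_r; unfold A; lra).
  nra.
Qed.

Lemma C_continuous_minus (f g : C -> C) (z : C) :
  C_continuous_at f z -> C_continuous_at g z -> C_continuous_at (fun w => Cminus (f w) (g w)) z.
Proof.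
  intros Hf Hg eps Heps.
  destruct (C_continuous_plus f (fun w => Cmult (Copp (RtoC 1)) (g w)) z Hf
              (C_continuous_mult _ _ _ (C_continuous_const _ _) Hg) eps Heps) as [d [Hd H]].
  exists d. split; [exact Hd |]. intros w Hw.
  replace (Cminus (Cminus (f w) (g w)) (Cminus (f z) (g z))) with
    (Cminus (Cplus (f w) (Cmult (Copp (RtoC 1)) (g w))) (Cplus (f z) (Cmult (Copp (RtoC 1)) (g z))))
    by ring.
  now apply H.
Qed.

Lemma Cmod_scal_line (p v : C) (s t : R) :
  Cmod (Cminus (Cplus p (Cmult (RtoC s) v)) (Cplus p (Cmult (RtoC t) v))) = Rabs (s - t) * Cmod v.
Proof.
  rewrite <- Cmod_R, <- Cmod_mult. f_equal. unfold Cminus. rewrite RtoC_minus. ring.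
Qed.

Lemma Rabs_lt_div_Cmod (u : R) (v : C) (d : R) : 0 < d -> Rabs u < d / (Cmod v + 1) ->
  Rabs u * Cmod v < d.
Proof.
  intros Hd Hu. pose proof (Cmod_ge_0 v). pose proof (Rabs_pos u).
  assert (Rabs u * (Cmod v + 1) < d).
  { apply (Rmult_lt_reg_r (/ (Cmod v + 1))); [apply Rinv_0_lt_compat; lra |].
    now rewrite Rmult_assoc, Rinv_r, Rmult_1_r by lra. }
  nra.
Qed.

Lemma scal_C_R (a : R) (c : C) : @scal R_Ring C_R_ModuleSpace a c = Cmult (RtoC a) c.
Proof.
  destruct c. unfold scal; simpl. unfold prod_scal, Cmult; simpl.
  unfold scal; simpl. unfold mult; simpl. f_equal; ring.
Qed.

Lemma norm_C_R (c : C) : @norm R_AbsRing C_R_NormedModule c = Cmod c.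
Proof. now rewrite Cmod_norm. Qed.

Lemma C_is_derive_line (F : C -> C) (p v : C) (t : R) (l : C) :
  C_is_derive F (Cplus p (Cmult (RtoC t) v)) l ->
  @is_derive R_AbsRing C_R_NormedModule (fun s => F (Cplus p (Cmult (RtoC s) v))) t (Cmult l v).
Proof.
  rewrite C_is_derive_eps. intros H. split; [apply is_linear_scal_l |].
  intros x Hx.
  assert (t = x) as <- by
    (apply (@is_filter_lim_locally_unique R_AbsRing R_NormedModule); exact Hx).
  intros eps. set (k := Cmod v + 1).
  assert (Hk : 0 < k) by (unfold k; pose proof (Cmod_ge_0 v); lra).
  destruct (H (eps / k)) as [d [Hd H1]]; [apply Rdiv_lt_0_compat; [apply cond_pos | exact Hk] |].
  exists (mkposreal (d / k) (Rdiv_lt_0_compat _ _ Hd Hk)). intros s Hs.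
  change (Rabs (s - t) < d / k) in Hs.
  specialize (H1 (Cplus p (Cmult (RtoC s) v))). rewrite Cmod_scal_line in H1.
  rewrite scal_C_R, norm_C_R. change (norm (minus s t)) with (Rabs (s - t)).
  change (minus s t) with (s - t).
  replace (Cmult (RtoC (s - t)) (Cmult l v)) with
    (Cmult (Cminus (Cplus p (Cmult (RtoC s) v)) (Cplus p (Cmult (RtoC t) v))) l)
    by (unfold Cminus; rewrite RtoC_minus; ring).
  change (@minus C_R_NormedModule) with Cminus.
  eapply Rle_trans; [apply H1, Rabs_lt_div_Cmod; assumption |].
  pose proof (Rabs_pos (s - t)). pose proof (cond_pos eps).
  apply Rle_trans with (eps / k * (Rabs (s - t) * k)); [| right; field; lra].
  apply Rmult_le_compat_l; [apply Rdiv_le_0_compat; lra |].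
  apply Rmult_le_compat_l; [lra | unfold k; lra].
Qed.

Lemma C_continuous_line_eps (F : C -> C) (p v : C) (t : R) :
  C_continuous_at F (Cplus p (Cmult (RtoC t) v)) ->
  forall eps, 0 < eps -> exists del, 0 < del /\ forall s, Rabs (s - t) < del ->
    Cmod (Cminus (F (Cplus p (Cmult (RtoC s) v))) (F (Cplus p (Cmult (RtoC t) v)))) < eps.
Proof.
  intros H eps Heps. destruct (H eps Heps) as [d [Hd H1]].
  assert (Hk : 0 < Cmod v + 1) by (pose proof (Cmod_ge_0 v); lra).
  exists (d / (Cmod v + 1)). split; [now apply Rdiv_lt_0_compat |].
  intros s Hs. apply H1. rewrite Cmod_scal_line. now apply Rabs_lt_div_Cmod.
Qed.

Lemma C_continuous_line (F : C -> C) (p v : C) (t : R) :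
  C_continuous_at F (Cplus p (Cmult (RtoC t) v)) ->
  @continuous R_UniformSpace C_R_NormedModule (fun s => F (Cplus p (Cmult (RtoC s) v))) t.
Proof.
  intros H. apply (@filterlim_locally_ball_norm R_AbsRing); [apply locally_filter |].
  intros eps. destruct (C_continuous_line_eps F p v t H eps (cond_pos eps)) as [d [Hd H1]].
  exists (mkposreal d Hd). intros s Hs. unfold ball_norm. rewrite norm_C_R. now apply H1.
Qed.

Lemma C_continuous_line_Cmod (F : C -> C) (p v : C) (t : R) :
  C_continuous_at F (Cplus p (Cmult (RtoC t) v)) ->
  continuity_pt (fun s => Cmod (F (Cplus p (Cmult (RtoC s) v)))) t.
Proof.
  intros H eps Heps. destruct (C_continuous_line_eps F p v t H eps Heps) as [d [Hd H1]].
  exists d. split; [exact Hd |]. intros s [_ Hs]. simpl in *. unfold R_dist in *.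
  eapply Rle_lt_trans; [| exact (H1 s Hs)].
  apply Rabs_le. split.
  - pose proof (Cmod_Cminus_ge (F (Cplus p (Cmult (RtoC t) v))) (F (Cplus p (Cmult (RtoC s) v)))).
    rewrite Cmod_Cminus_sym in H0. lra.
  - apply Cmod_Cminus_ge.
Qed.

Lemma is_derive_Re (G : R -> C) (t : R) (l : C) :
  @is_derive R_AbsRing C_R_NormedModule G t l -> is_derive (fun s => Re (G s)) t (Re l).
Proof.
  intros H. eapply filterdiff_ext_lin.
  - apply (filterdiff_comp' G (@fst R R) t _ (@fst R R) H).
    apply filterdiff_linear, (is_linear_fst (U:=R_NormedModule) (V:=R_NormedModule)).
  - intros y. now destruct l.
Qed.

Lemma is_derive_Im (G : R -> C) (t : R) (l : C) :
  @is_derive R_AbsRing C_R_NormedModule G t l -> is_derive (fun s => Im (G s)) t (Im l).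
Proof.
  intros H. eapply filterdiff_ext_lin.
  - apply (filterdiff_comp' G (@snd R R) t _ (@snd R R) H).
    apply filterdiff_linear, (is_linear_snd (U:=R_NormedModule) (V:=R_NormedModule)).
  - intros y. now destruct l.
Qed.

Definition CRInt (f : R -> C) (a b : R) : C := @RInt C_R_CompleteNormedModule f a b.

Lemma is_RInt_Cmult_l (f : R -> C) (a b : R) (l k : C) :
  @is_RInt C_R_NormedModule f a b l ->
  @is_RInt C_R_NormedModule (fun t => Cmult k (f t)) a b (Cmult k l).
Proof.
  intros H. destruct k as [k1 k2], l as [l1 l2].
  pose proof (@is_RInt_fct_extend_fst R_NormedModule R_NormedModule f a b (l1, l2) H) as H1.
  pose proof (@is_RInt_fct_extend_snd R_NormedModule R_NormedModule f a b (l1, l2) H) as H2.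
  simpl in H1, H2. unfold Cmult; simpl.
  apply (@is_RInt_fct_extend_pair R_NormedModule R_NormedModule); simpl.
  - apply (is_RInt_minus (V:=R_NormedModule));
      apply (is_RInt_scal (V:=R_NormedModule)); assumption.
  - apply (is_RInt_plus (V:=R_NormedModule));
      apply (is_RInt_scal (V:=R_NormedModule)); assumption.
Qed.

Lemma CRInt_Cmult_l (f : R -> C) (a b : R) (k : C) :
  ex_RInt (V:=C_R_NormedModule) f a b ->
  CRInt (fun t => Cmult k (f t)) a b = Cmult k (CRInt f a b).
Proof.
  intros H. apply (is_RInt_unique (V:=C_R_CompleteNormedModule)), is_RInt_Cmult_l.
  exact (RInt_correct (V:=C_R_CompleteNormedModule) _ _ _ H).
Qed.

Lemma CRInt_minus (f g : R -> C) (a b : R) :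
  ex_RInt (V:=C_R_NormedModule) f a b -> ex_RInt (V:=C_R_NormedModule) g a b ->
  CRInt (fun t => Cminus (f t) (g t)) a b = Cminus (CRInt f a b) (CRInt g a b).
Proof. exact (RInt_minus (V:=C_R_CompleteNormedModule) f g a b). Qed.

Lemma CRInt_Chasles (f : R -> C) (a m b : R) :
  ex_RInt (V:=C_R_NormedModule) f a m -> ex_RInt (V:=C_R_NormedModule) f m b ->
  CRInt f a b = Cplus (CRInt f a m) (CRInt f m b).
Proof. intros H1 H2. symmetry. exact (RInt_Chasles (V:=C_R_CompleteNormedModule) f a m b H1 H2). Qed.

Lemma CRInt_point (f : R -> C) (a : R) : CRInt f a a = RtoC 0.
Proof. exact (RInt_point (V:=C_R_CompleteNormedModule) a f). Qed.

Lemma CRInt_norm_le (f : R -> C) (a b M : R) : a <= b ->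
  ex_RInt (V:=C_R_NormedModule) f a b ->
  (forall t, a <= t <= b -> Cmod (f t) <= M) -> Cmod (CRInt f a b) <= (b - a) * M.
Proof.
  intros Hab Hex HM. rewrite <- norm_C_R.
  apply (norm_RInt_le_const (V:=C_R_NormedModule) f a b); [exact Hab | |].
  - intros t Ht. rewrite norm_C_R. now apply HM.
  - exact (RInt_correct (V:=C_R_CompleteNormedModule) _ _ _ Hex).
Qed.

Lemma Re_CRInt (f : R -> C) (a b : R) : ex_RInt (V:=C_R_NormedModule) f a b ->
  Re (CRInt f a b) = RInt (fun t => Re (f t)) a b.
Proof.
  intros H. symmetry. apply is_RInt_unique.
  apply (is_RInt_fct_extend_fst (U:=R_NormedModule) (V:=R_NormedModule)).
  exact (RInt_correct (V:=C_R_CompleteNormedModule) _ _ _ H).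
Qed.

Lemma Im_CRInt (f : R -> C) (a b : R) : ex_RInt (V:=C_R_NormedModule) f a b ->
  Im (CRInt f a b) = RInt (fun t => Im (f t)) a b.
Proof.
  intros H. symmetry. apply is_RInt_unique.
  apply (is_RInt_fct_extend_snd (U:=R_NormedModule) (V:=R_NormedModule)).
  exact (RInt_correct (V:=C_R_CompleteNormedModule) _ _ _ H).
Qed.

Lemma CRInt_line_primitive (F G : C -> C) (p v : C) (a b : R) : a <= b ->
  (forall t, a <= t <= b -> C_is_derive F (Cplus p (Cmult (RtoC t) v)) (G (Cplus p (Cmult (RtoC t) v)))) ->
  (forall t, a <= t <= b -> C_continuous_at G (Cplus p (Cmult (RtoC t) v))) ->
  CRInt (fun t => Cmult (G (Cplus p (Cmult (RtoC t) v))) v) a b =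
  Cminus (F (Cplus p (Cmult (RtoC b) v))) (F (Cplus p (Cmult (RtoC a) v))).
Proof.
  intros Hab HD HC. apply (is_RInt_unique (V:=C_R_CompleteNormedModule)).
  apply (is_RInt_derive (V:=C_R_CompleteNormedModule) (fun s => F (Cplus p (Cmult (RtoC s) v))));
    intros x Hx; rewrite Rmin_left in Hx by lra; rewrite Rmax_right in Hx by lra.
  - now apply C_is_derive_line, HD.
  - apply (C_continuous_line (fun w => Cmult (G w) v)).
    apply C_continuous_mult; [now apply HC | apply C_continuous_const].
Qed.

Lemma C_is_derive_segment_const (F : C -> C) (p v : C) :
  (forall t, 0 <= t <= 1 -> C_is_derive F (Cplus p (Cmult (RtoC t) v)) (RtoC 0)) ->
  F (Cplus p v) = F p.
Proof.
  intros H.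
  pose proof (CRInt_line_primitive F (fun _ => RtoC 0) p v 0 1 ltac:(lra) H
                (fun t _ => C_continuous_const _ _)) as E.
  unfold CRInt in E. rewrite (RInt_const (V:=C_R_CompleteNormedModule)), scal_C_R in E.
  replace (Cplus p (Cmult (RtoC 1) v)) with (Cplus p v) in E by ring.
  replace (Cplus p (Cmult (RtoC 0) v)) with p in E by ring.
  replace (F (Cplus p v)) with (Cplus (Cminus (F (Cplus p v)) (F p)) (F p)) by ring.
  rewrite <- E. ring.
Qed.

(* Integral of [F] over the positively oriented boundary of [a, b] x [c, d]. *)
Definition rect_integral (F : C -> C) (a b c d : R) : C :=
  Cminus (Cminus (Cplus (CRInt (fun t => F (t, c)) a b) (Cmult Ci (CRInt (fun t => F (b, t)) c d)))
    (CRInt (fun t => F (t, d)) a b)) (Cmult Ci (CRInt (fun t => F (a, t)) c d)).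

Definition on_rect_boundary (a b c d x y : R) : Prop :=
  (a <= x <= b /\ (y = c \/ y = d)) \/ ((x = a \/ x = b) /\ c <= y <= d).

Definition C_continuous_on_rect (F : C -> C) (a b c d : R) : Prop :=
  forall x y, a <= x <= b -> c <= y <= d -> C_continuous_at F (x, y).

Definition C_continuous_on_rect_boundary (F : C -> C) (a b c d : R) : Prop :=
  forall x y, on_rect_boundary a b c d x y -> C_continuous_at F (x, y).

Lemma C_continuous_on_subrect (F : C -> C) (a b c d a' b' c' d' : R) :
  C_continuous_on_rect F a b c d -> a <= a' -> b' <= b -> c <= c' -> d' <= d ->
  C_continuous_on_rect F a' b' c' d'.
Proof. intros H ? ? ? ? x y ? ?. apply H; lra. Qed.

Lemma C_continuous_on_rect_boundary_of_rect (F : C -> C) (a b c d : R) :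
  C_continuous_on_rect F a b c d -> a <= b -> c <= d -> C_continuous_on_rect_boundary F a b c d.
Proof.
  intros H ? ? x y Hb. apply H; destruct Hb as [[? [-> | ->]] | [[-> | ->] ?]]; lra.
Qed.

Lemma point_horizontal (t y : R) : ((t, y) : C) = Cplus ((0%R, y) : C) (Cmult (RtoC t) (RtoC 1)).
Proof. unfold Cplus, Cmult, RtoC; simpl. f_equal; ring. Qed.

Lemma point_vertical (x t : R) : ((x, t) : C) = Cplus (RtoC x) (Cmult (RtoC t) Ci).
Proof. unfold Cplus, Cmult, RtoC, Ci; simpl. f_equal; ring. Qed.

Lemma ex_RInt_horizontal (F : C -> C) (a b c d y a' b' : R) :
  C_continuous_on_rect_boundary F a b c d -> a <= a' <= b' -> b' <= b -> (y = c \/ y = d) ->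
  ex_RInt (V:=C_R_NormedModule) (fun t => F (t, y)) a' b'.
Proof.
  intros H Ha Hb Hy. apply (ex_RInt_continuous (V:=C_R_CompleteNormedModule)).
  intros t Ht. rewrite Rmin_left in Ht by lra. rewrite Rmax_right in Ht by lra.
  apply (continuous_ext (fun s => F (Cplus ((0%R, y) : C) (Cmult (RtoC s) (RtoC 1))))).
  { intros s. now rewrite <- point_horizontal. }
  apply C_continuous_line. rewrite <- point_horizontal. apply H. left. split; [lra | exact Hy].
Qed.

Lemma ex_RInt_vertical (F : C -> C) (a b c d x c' d' : R) :
  C_continuous_on_rect_boundary F a b c d -> c <= c' <= d' -> d' <= d -> (x = a \/ x = b) ->
  ex_RInt (V:=C_R_NormedModule) (fun t => F (x, t)) c' d'.
Proof.
  intros H Hc Hd Hx. apply (ex_RInt_continuous (V:=C_R_CompleteNormedModule)).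
  intros t Ht. rewrite Rmin_left in Ht by lra. rewrite Rmax_right in Ht by lra.
  apply (continuous_ext (fun s => F (Cplus (RtoC x) (Cmult (RtoC s) Ci)))).
  { intros s. now rewrite <- point_vertical. }
  apply C_continuous_line. rewrite <- point_vertical. apply H. right. split; [exact Hx | lra].
Qed.

Ltac edge_integrable :=
  match goal with
  | |- ex_RInt (fun t => ?F (t, _)) _ _ =>
      eapply (ex_RInt_horizontal F); [eassumption | lra | lra | tauto]
  | |- ex_RInt (fun t => ?F (_, t)) _ _ =>
      eapply (ex_RInt_vertical F); [eassumption | lra | lra | tauto]
  end.

Lemma rect_integral_minus (F G : C -> C) (a b c d : R) :
  C_continuous_on_rect_boundary F a b c d -> C_continuous_on_rect_boundary G a b c d ->
  a <= b -> c <= d ->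
  rect_integral (fun z => Cminus (F z) (G z)) a b c d =
  Cminus (rect_integral F a b c d) (rect_integral G a b c d).
Proof.
  intros HF HG Hab Hcd. unfold rect_integral.
  rewrite !(CRInt_minus (fun t => F _) (fun t => G _)) by edge_integrable. ring.
Qed.

Lemma rect_integral_Cmult_l (F : C -> C) (k : C) (a b c d : R) :
  C_continuous_on_rect_boundary F a b c d -> a <= b -> c <= d ->
  rect_integral (fun z => Cmult k (F z)) a b c d = Cmult k (rect_integral F a b c d).
Proof.
  intros HF Hab Hcd. unfold rect_integral.
  rewrite !(CRInt_Cmult_l (fun t => F _)) by edge_integrable. ring.
Qed.

Lemma rect_integral_ext (F G : C -> C) (a b c d : R) : a <= b -> c <= d ->
  (forall x y, on_rect_boundary a b c d x y -> F (x, y) = G (x, y)) ->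
  rect_integral F a b c d = rect_integral G a b c d.
Proof.
  intros Hab Hcd H. unfold rect_integral, CRInt.
  rewrite (RInt_ext (V:=C_R_CompleteNormedModule) (fun t => F (t, c)) (fun t => G (t, c))),
    (RInt_ext (V:=C_R_CompleteNormedModule) (fun t => F (t, d)) (fun t => G (t, d))),
    (RInt_ext (V:=C_R_CompleteNormedModule) (fun t => F (a, t)) (fun t => G (a, t))),
    (RInt_ext (V:=C_R_CompleteNormedModule) (fun t => F (b, t)) (fun t => G (b, t)));
    [reflexivity | ..];
    intros t Ht; rewrite ?Rmin_left, ?Rmax_right in Ht by lra; apply H; unfold on_rect_boundary; lra.
Qed.

Lemma rect_integral_norm_le (F : C -> C) (a b c d M : R) :
  C_continuous_on_rect_boundary F a b c d -> a <= b -> c <= d ->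
  (forall x y, on_rect_boundary a b c d x y -> Cmod (F (x, y)) <= M) ->
  Cmod (rect_integral F a b c d) <= 2 * ((b - a) + (d - c)) * M.
Proof.
  intros HF Hab Hcd HM. unfold rect_integral.
  assert (Hh : forall y, y = c \/ y = d -> Cmod (CRInt (fun t => F (t, y)) a b) <= (b - a) * M).
  { intros y Hy. apply CRInt_norm_le; [exact Hab | edge_integrable |].
    intros t Ht. apply HM. unfold on_rect_boundary. lra. }
  assert (Hv : forall x, x = a \/ x = b -> Cmod (CRInt (fun t => F (x, t)) c d) <= (d - c) * M).
  { intros x Hx. apply CRInt_norm_le; [exact Hcd | edge_integrable |].
    intros t Ht. apply HM. unfold on_rect_boundary. lra. }
  eapply Rle_trans; [apply Cmod_Cminus_le |].
  eapply Rle_trans; [apply Rplus_le_compat_r, Cmod_Cminus_le |].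
  eapply Rle_trans; [apply Rplus_le_compat_r, Rplus_le_compat_r, Cmod_triangle |].
  rewrite !Cmod_mult, !Cmod_Ci.
  pose proof (Hh c (or_introl eq_refl)). pose proof (Hh d (or_intror eq_refl)).
  pose proof (Hv a (or_introl eq_refl)). pose proof (Hv b (or_intror eq_refl)). lra.
Qed.

Lemma rect_integral_primitive (F G : C -> C) (a b c d : R) : a <= b -> c <= d ->
  (forall x y, on_rect_boundary a b c d x y -> C_is_derive F (x, y) (G (x, y))) ->
  C_continuous_on_rect_boundary G a b c d -> rect_integral G a b c d = RtoC 0.
Proof.
  intros Hab Hcd HD HC.
  assert (Hh : forall y, y = c \/ y = d ->
            CRInt (fun t => G (t, y)) a b = Cminus (F (b, y)) (F (a, y))).
  { intros y Hy. rewrite (point_horizontal b y), (point_horizontal a y), <- CRInt_line_primitive with (G := G); try assumption.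
    - unfold CRInt. apply (RInt_ext (V:=C_R_CompleteNormedModule)). intros t _.
      now rewrite Cmult_1_r, <- point_horizontal.
    - intros t Ht. rewrite <- point_horizontal. apply HD. unfold on_rect_boundary. lra.
    - intros t Ht. rewrite <- point_horizontal. apply HC. unfold on_rect_boundary. lra. }
  assert (Hv : forall x, x = a \/ x = b ->
            Cmult Ci (CRInt (fun t => G (x, t)) c d) = Cminus (F (x, d)) (F (x, c))).
  { intros x Hx. rewrite <- CRInt_Cmult_l by edge_integrable.
    rewrite (point_vertical x d), (point_vertical x c), <- CRInt_line_primitive with (G := G); try assumption.
    - unfold CRInt. apply (RInt_ext (V:=C_R_CompleteNormedModule)). intros t _.
      now rewrite Cmult_comm, <- point_vertical.
    - intros t Ht. rewrite <- point_vertical. apply HD. unfold on_rect_boundary. lra.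
    - intros t Ht. rewrite <- point_vertical. apply HC. unfold on_rect_boundary. lra. }
  unfold rect_integral. rewrite !Hh, !Hv by tauto. ring.
Qed.

Lemma rect_integral_split_x (F : C -> C) (a m b c d : R) :
  C_continuous_on_rect_boundary F a b c d -> a <= m <= b ->
  rect_integral F a b c d = Cplus (rect_integral F a m c d) (rect_integral F m b c d).
Proof.
  intros H Hm. unfold rect_integral.
  rewrite (CRInt_Chasles (fun t => F (t, c)) a m b), (CRInt_Chasles (fun t => F (t, d)) a m b)
    by edge_integrable.
  ring.
Qed.

Lemma rect_integral_split_y (F : C -> C) (a b c m d : R) :
  C_continuous_on_rect_boundary F a b c d -> c <= m <= d ->
  rect_integral F a b c d = Cplus (rect_integral F a b c m) (rect_integral F a b m d).
Proof.
  intros H Hm. unfold rect_integral.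
  rewrite (CRInt_Chasles (fun t => F (b, t)) c m d), (CRInt_Chasles (fun t => F (a, t)) c m d)
    by edge_integrable.
  ring.
Qed.

Lemma rect_integral_flat_x (F : C -> C) (a c d : R) : rect_integral F a a c d = RtoC 0.
Proof. unfold rect_integral. rewrite !CRInt_point. ring. Qed.

Lemma rect_integral_flat_y (F : C -> C) (a b c : R) : rect_integral F a b c c = RtoC 0.
Proof. unfold rect_integral. rewrite !CRInt_point. ring. Qed.

(** * Goursat's theorem *)

Lemma Cmod_pair_le (x y : R) : Cmod ((x, y) : C) <= Rabs x + Rabs y.
Proof.
  replace ((x, y) : C) with (Cplus (RtoC x) (Cmult Ci (RtoC y)))
    by (unfold Cplus, Cmult, Ci, RtoC; simpl; f_equal; ring).
  eapply Rle_trans; [apply Cmod_triangle |]. rewrite Cmod_mult, Cmod_Ci, !Cmod_R. lra.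
Qed.

Lemma Cminus_pair (x y x' y' : R) : Cminus (x, y) (x', y') = ((x - x', y - y')%R : C).
Proof. unfold Cminus, Cplus, Copp. simpl. f_equal; ring. Qed.

Lemma Cmod_Cminus_in_rect (x y x' y' a b c d : R) :
  a <= x <= b -> c <= y <= d -> a <= x' <= b -> c <= y' <= d ->
  Cmod (Cminus (x, y) (x', y')) <= (b - a) + (d - c).
Proof.
  intros. rewrite Cminus_pair. eapply Rle_trans; [apply Cmod_pair_le |].
  unfold Rabs. repeat destruct Rcase_abs; lra.
Qed.

Lemma rect_integral_affine (p q : C) (a b c d : R) : a <= b -> c <= d ->
  rect_integral (fun z => Cplus p (Cmult q z)) a b c d = RtoC 0.
Proof.
  intros Hab Hcd.
  apply rect_integral_primitive
    with (F := fun z => Cplus (Cmult p z) (Cmult q (Cmult (Cmult z z) (Cinv (RtoC 2)))));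
    [assumption | assumption | intros x y _ ..].
  - eapply C_is_derive_change.
    + apply C_is_derive_plus.
      * apply C_is_derive_mult; [apply C_is_derive_const | apply C_is_derive_id].
      * apply C_is_derive_mult; [apply C_is_derive_const |].
        apply C_is_derive_mult; [apply C_is_derive_mult; apply C_is_derive_id | apply C_is_derive_const].
    + simpl. field.
  - apply (C_is_derive_continuous _ _ q). eapply C_is_derive_change.
    + apply C_is_derive_plus; [apply C_is_derive_const |].
      apply C_is_derive_mult; [apply C_is_derive_const | apply C_is_derive_id].
    + simpl. ring.
Qed.

(* Subtracting the affine approximation of [F] at a point of the rectangle
   leaves an integrand of size [eps * diameter], whose integral is at most
   [2 * perimeter * eps * diameter]. *)
Lemma rect_integral_local_estimate (F : C -> C) (a b c d X Y eps del : R) (l : C) :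
  0 <= eps -> C_continuous_on_rect F a b c d -> a <= X <= b -> c <= Y <= d ->
  (b - a) + (d - c) < del ->
  (forall w, Cmod (Cminus w (X, Y)) < del ->
     Cmod (Cminus (Cminus (F w) (F (X, Y))) (Cmult (Cminus w (X, Y)) l)) <= eps * Cmod (Cminus w (X, Y))) ->
  Cmod (rect_integral F a b c d) <= 2 * ((b - a) + (d - c)) * (eps * ((b - a) + (d - c))).
Proof.
  intros Heps HF HX HY Hdel Hl.
  assert (Hab : a <= b) by lra. assert (Hcd : c <= d) by lra.
  set (A := fun z => Cplus (Cminus (F (X, Y)) (Cmult (X, Y) l)) (Cmult l z)).
  assert (HA : C_continuous_on_rect_boundary A a b c d).
  { intros x y _. apply (C_is_derive_continuous _ _ l). eapply C_is_derive_change.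
    - apply C_is_derive_plus; [apply C_is_derive_const |].
      apply C_is_derive_mult; [apply C_is_derive_const | apply C_is_derive_id].
    - simpl. ring. }
  assert (HFb := C_continuous_on_rect_boundary_of_rect F a b c d HF Hab Hcd).
  replace (rect_integral F a b c d) with (rect_integral (fun z => Cminus (F z) (A z)) a b c d).
  2: { rewrite rect_integral_minus by assumption. unfold A. rewrite rect_integral_affine by assumption. ring. }
  apply rect_integral_norm_le; try assumption.
  - intros x y Hb. apply C_continuous_minus; [now apply HFb | now apply HA].
  - intros x y Hb.
    assert (Hm : Cmod (Cminus (x, y) (X, Y)) <= (b - a) + (d - c))
      by (apply Cmod_Cminus_in_rect; unfold on_rect_boundary in Hb; lra).
    unfold A. replace (Cminus (F (x, y)) (Cplus (Cminus (F (X, Y)) (Cmult (X, Y) l)) (Cmult l (x, y))))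
      with (Cminus (Cminus (F (x, y)) (F (X, Y))) (Cmult (Cminus (x, y) (X, Y)) l)) by ring.
    eapply Rle_trans; [apply Hl; lra |]. apply Rmult_le_compat_l; [exact Heps | exact Hm].
Qed.

Record box := Box { xlo : R; xhi : R; ylo : R; yhi : R }.

Definition box_integral (F : C -> C) (r : box) : C :=
  rect_integral F (xlo r) (xhi r) (ylo r) (yhi r).

Definition heavier_box (F : C -> C) (r s : box) : box :=
  if Rle_dec (Cmod (box_integral F s)) (Cmod (box_integral F r)) then r else s.

Definition bisect (F : C -> C) (r : box) : box :=
  let mx := (xlo r + xhi r) / 2 in let my := (ylo r + yhi r) / 2 in
  heavier_box F
    (heavier_box F (Box (xlo r) mx (ylo r) my) (Box mx (xhi r) (ylo r) my))
    (heavier_box F (Box (xlo r) mx my (yhi r)) (Box mx (xhi r) my (yhi r))).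

Fixpoint bisect_iter (F : C -> C) (r : box) (n : nat) : box :=
  match n with O => r | S k => bisect F (bisect_iter F r k) end.

Definition box_wf (r : box) : Prop := xlo r <= xhi r /\ ylo r <= yhi r.

Lemma heavier_box_cases (F : C -> C) (r s : box) : heavier_box F r s = r \/ heavier_box F r s = s.
Proof. unfold heavier_box. destruct Rle_dec; auto. Qed.

Lemma heavier_box_ge (F : C -> C) (r s : box) :
  Cmod (box_integral F r) <= Cmod (box_integral F (heavier_box F r s)) /\
  Cmod (box_integral F s) <= Cmod (box_integral F (heavier_box F r s)).
Proof. unfold heavier_box. destruct Rle_dec; lra. Qed.

Lemma bisect_shape (F : C -> C) (r : box) : box_wf r ->
  let r' := bisect F r in
  xlo r <= xlo r' /\ xhi r' <= xhi r /\ xhi r' - xlo r' = (xhi r - xlo r) / 2 /\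
  ylo r <= ylo r' /\ yhi r' <= yhi r /\ yhi r' - ylo r' = (yhi r - ylo r) / 2.
Proof.
  intros [H1 H2] r'. unfold r', bisect.
  set (mx := (xlo r + xhi r) / 2). set (my := (ylo r + yhi r) / 2).
  destruct (heavier_box_cases F (heavier_box F (Box (xlo r) mx (ylo r) my) (Box mx (xhi r) (ylo r) my))
              (heavier_box F (Box (xlo r) mx my (yhi r)) (Box mx (xhi r) my (yhi r)))) as [-> | ->];
  [destruct (heavier_box_cases F (Box (xlo r) mx (ylo r) my) (Box mx (xhi r) (ylo r) my)) as [-> | ->]
  |destruct (heavier_box_cases F (Box (xlo r) mx my (yhi r)) (Box mx (xhi r) my (yhi r))) as [-> | ->]];
  simpl; unfold mx, my; lra.
Qed.

Lemma bisect_integral (F : C -> C) (r : box) : box_wf r ->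
  C_continuous_on_rect F (xlo r) (xhi r) (ylo r) (yhi r) ->
  Cmod (box_integral F r) <= 4 * Cmod (box_integral F (bisect F r)).
Proof.
  destruct r as [a b c d]. unfold box_wf. simpl. intros [Hab Hcd] HC.
  set (m := (a + b) / 2). set (n := (c + d) / 2).
  assert (Hb : forall a' b' c' d', a <= a' <= b' -> b' <= b -> c <= c' <= d' -> d' <= d ->
             C_continuous_on_rect_boundary F a' b' c' d').
  { intros. apply C_continuous_on_rect_boundary_of_rect; [| lra | lra].
    eapply C_continuous_on_subrect; [exact HC | ..]; lra. }
  assert (E : box_integral F (Box a b c d) =
    Cplus (Cplus (box_integral F (Box a m c n)) (box_integral F (Box a m n d)))
          (Cplus (box_integral F (Box m b c n)) (box_integral F (Box m b n d)))).
  { unfold box_integral; simpl.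
    rewrite (rect_integral_split_x F a m b c d), (rect_integral_split_y F a m c n d),
      (rect_integral_split_y F m b c n d) by first [apply Hb; unfold m, n; lra | unfold m, n; lra].
    ring. }
  unfold bisect; simpl. fold m n.
  destruct (heavier_box_ge F (heavier_box F (Box a m c n) (Box m b c n))
              (heavier_box F (Box a m n d) (Box m b n d))).
  destruct (heavier_box_ge F (Box a m c n) (Box m b c n)).
  destruct (heavier_box_ge F (Box a m n d) (Box m b n d)).
  rewrite E. eapply Rle_trans; [apply Cmod_triangle |].
  eapply Rle_trans; [apply Rplus_le_compat; apply Cmod_triangle |]. lra.
Qed.

Section Bisection.

Variables (F : C -> C) (r0 : box).
Hypothesis r0_wf : box_wf r0.

Let r (n : nat) : box := bisect_iter F r0 n.

Lemma bisect_iter_shape (n : nat) :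
  box_wf (r n) /\ xlo r0 <= xlo (r n) /\ xhi (r n) <= xhi r0 /\
  ylo r0 <= ylo (r n) /\ yhi (r n) <= yhi r0 /\
  xhi (r n) - xlo (r n) = (xhi r0 - xlo r0) / 2 ^ n /\
  yhi (r n) - ylo (r n) = (yhi r0 - ylo r0) / 2 ^ n.
Proof.
  destruct r0_wf as [Hx Hy]. induction n as [| n IH].
  - unfold r, box_wf. simpl. unfold Rdiv. rewrite Rinv_1. lra.
  - destruct IH as ([h1 h2] & h3 & h4 & h5 & h6 & h7 & h8).
    destruct (bisect_shape F (r n) (conj h1 h2)) as (k1 & k2 & k3 & k4 & k5 & k6).
    change (r (S n)) with (bisect F (r n)). rewrite <- tech_pow_Rmult.
    assert (0 < 2 ^ n) by (apply pow_lt; lra).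
    unfold box_wf. repeat split; try lra.
    + rewrite k3, h7. field. lra.
    + rewrite k6, h8. field. lra.
Qed.

Lemma bisect_iter_mono (n k : nat) :
  xlo (r n) <= xlo (r (n + k)) /\ xhi (r (n + k)) <= xhi (r n) /\
  ylo (r n) <= ylo (r (n + k)) /\ yhi (r (n + k)) <= yhi (r n).
Proof.
  induction k as [| k IH].
  - rewrite Nat.add_0_r. lra.
  - rewrite Nat.add_succ_r.
    destruct (bisect_iter_shape (n + k)) as (Hwf & _).
    destruct (bisect_shape F (r (n + k)) Hwf) as (k1 & k2 & _ & k4 & k5 & _).
    change (r (S (n + k))) with (bisect F (r (n + k))). lra.
Qed.

Lemma bisect_iter_lo_le_hi (n m : nat) : xlo (r n) <= xhi (r m) /\ ylo (r n) <= yhi (r m).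
Proof.
  destruct (Nat.le_ge_cases n m) as [H | H];
    destruct (Nat.le_exists_sub _ _ H) as [k [-> _]]; rewrite Nat.add_comm;
    [pose proof (bisect_iter_mono n k) | pose proof (bisect_iter_mono m k)];
    [destruct (bisect_iter_shape (n + k)) as ([? ?] & _) | destruct (bisect_iter_shape (m + k)) as ([? ?] & _)];
    lra.
Qed.

Lemma bisect_iter_common_point :
  exists X Y, forall n, xlo (r n) <= X <= xhi (r n) /\ ylo (r n) <= Y <= yhi (r n).
Proof.
  destruct (completeness (fun x => exists n, x = xlo (r n))) as [X [HX1 HX2]].
  { exists (xhi r0). intros x [n ->]. apply (bisect_iter_lo_le_hi n 0). }
  { exists (xlo r0). now exists O. }
  destruct (completeness (fun y => exists n, y = ylo (r n))) as [Y [HY1 HY2]].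
  { exists (yhi r0). intros y [n ->]. apply (bisect_iter_lo_le_hi n 0). }
  { exists (ylo r0). now exists O. }
  exists X, Y. intros n. repeat split.
  - apply HX1. now exists n.
  - apply HX2. intros x [k ->]. apply bisect_iter_lo_le_hi.
  - apply HY1. now exists n.
  - apply HY2. intros y [k ->]. apply bisect_iter_lo_le_hi.
Qed.

Lemma bisect_iter_integral (n : nat) :
  C_continuous_on_rect F (xlo r0) (xhi r0) (ylo r0) (yhi r0) ->
  Cmod (box_integral F r0) <= 4 ^ n * Cmod (box_integral F (r n)).
Proof.
  intros HC. induction n as [| n IH].
  - unfold r. simpl. lra.
  - destruct (bisect_iter_shape n) as (Hwf & h3 & h4 & h5 & h6 & _).
    pose proof (bisect_integral F (r n) Hwf
                  ltac:(eapply C_continuous_on_subrect; [exact HC | ..]; lra)).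
    assert (0 < 4 ^ n) by (apply pow_lt; lra).
    change (r (S n)) with (bisect F (r n)). rewrite <- tech_pow_Rmult. nra.
Qed.

End Bisection.

Lemma exists_pow2_gt (K del : R) : 0 < del -> exists n : nat, K < del * 2 ^ n.
Proof.
  intros Hdel. destruct (Pow_x_infinity 2 ltac:(rewrite Rabs_pos_eq; lra) (K / del + 1)) as [N HN].
  exists N. specialize (HN N (Nat.le_refl N)). rewrite Rabs_pos_eq in HN by (apply pow_le; lra).
  apply (Rmult_lt_reg_r (/ del)); [now apply Rinv_0_lt_compat |].
  rewrite (Rmult_comm del), Rmult_assoc, Rinv_r, Rmult_1_r by lra. fold (K / del). lra.
Qed.

Lemma Cmod_le_eps_eq0 (z : C) (K : R) : 0 <= K ->
  (forall eps, 0 < eps -> Cmod z <= eps * K) -> z = RtoC 0.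
Proof.
  intros HK H. apply Cmod_eq_0. pose proof (Cmod_ge_0 z).
  destruct (Rle_lt_or_eq_dec 0 (Cmod z) H0) as [Hz | Hz]; [exfalso | now symmetry].
  specialize (H (Cmod z / (2 * (K + 1))) ltac:(apply Rdiv_lt_0_compat; lra)).
  assert (Cmod z / (2 * (K + 1)) * K < Cmod z); [| lra].
  replace (Cmod z / (2 * (K + 1)) * K) with (Cmod z * (K / (2 * (K + 1)))) by (field; lra).
  rewrite <- (Rmult_1_r (Cmod z)) at 2. apply Rmult_lt_compat_l; [exact Hz |].
  apply (Rmult_lt_reg_r (2 * (K + 1))); [lra |].
  unfold Rdiv. rewrite Rmult_assoc, Rinv_l by lra. lra.
Qed.

(* Bisection concentrates the integral at a point [(X, Y)] of the rectangle,
   where the local estimate beats the factor [4 ^ n] lost in the bisection. *)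
Theorem goursat_rect (F : C -> C) (a b c d : R) : a <= b -> c <= d ->
  (forall x y, a <= x <= b -> c <= y <= d -> exists l, C_is_derive F (x, y) l) ->
  rect_integral F a b c d = RtoC 0.
Proof.
  intros Hab Hcd HD.
  assert (HC : C_continuous_on_rect F a b c d).
  { intros x y Hx Hy. destruct (HD x y Hx Hy) as [l Hl]. exact (C_is_derive_continuous _ _ _ Hl). }
  set (r0 := Box a b c d). assert (Hwf : box_wf r0) by (split; simpl; lra).
  destruct (bisect_iter_common_point F r0 Hwf) as [X [Y HXY]].
  destruct (HXY O) as [HX0 HY0]. simpl in HX0, HY0.
  destruct (HD X Y HX0 HY0) as [l Hl]. rewrite C_is_derive_eps in Hl.
  set (S := (b - a) + (d - c)).
  apply Cmod_le_eps_eq0 with (2 * S * S); [unfold S; nra |].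
  intros eps Heps. destruct (Hl eps Heps) as [del [Hdel Hd]].
  destruct (exists_pow2_gt S del Hdel) as [n Hn].
  set (r := bisect_iter F r0 n).
  destruct (bisect_iter_shape F r0 Hwf n) as ([? ?] & h3 & h4 & h5 & h6 & h7 & h8).
  fold r in h3, h4, h5, h6, h7, h8. simpl in h3, h4, h5, h6, h7, h8.
  destruct (HXY n) as [HXn HYn]. fold r in HXn, HYn.
  assert (Hp : 0 < 2 ^ n) by (apply pow_lt; lra).
  assert (HSn : (xhi r - xlo r) + (yhi r - ylo r) = S / 2 ^ n)
    by (rewrite h7, h8; unfold S; field; lra).
  assert (HSdel : S / 2 ^ n < del).
  { apply (Rmult_lt_reg_r (2 ^ n)); [exact Hp |].
    unfold Rdiv. rewrite Rmult_assoc, Rinv_l by lra. lra. }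
  pose proof (bisect_iter_integral F r0 Hwf n HC) as Hbis.
  pose proof (rect_integral_local_estimate F (xlo r) (xhi r) (ylo r) (yhi r) X Y eps del l
    ltac:(lra) ltac:(eapply C_continuous_on_subrect; [exact HC | ..]; lra) HXn HYn ltac:(lra) Hd) as Hloc.
  unfold box_integral in Hbis. fold r in Hbis. simpl in Hbis. rewrite HSn in Hloc.
  assert (E4 : 4 ^ n * (2 * (S / 2 ^ n) * (eps * (S / 2 ^ n))) = eps * (2 * S * S))
    by (replace 4 with (2 * 2) by lra; rewrite Rpow_mult_distr; field; lra).
  assert (0 < 4 ^ n) by (apply pow_lt; lra).
  nra.
Qed.

Section Punctured.

Variables (F : C -> C) (p1 p2 : R).

Definition C_derivable_on_rect_except (a b c d : R) : Prop :=
  forall x y, a <= x <= b -> c <= y <= d -> ((x, y) : C) <> (p1, p2) ->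
    exists l, C_is_derive F (x, y) l.

Lemma rect_integral_eq0_off_point (a b c d : R) : a <= b -> c <= d ->
  C_derivable_on_rect_except a b c d ->
  (a = b \/ c = d \/ p1 < a \/ b < p1 \/ p2 < c \/ d < p2) ->
  rect_integral F a b c d = RtoC 0.
Proof.
  intros Hab Hcd HD [-> | [-> | Hp]].
  - apply rect_integral_flat_x.
  - apply rect_integral_flat_y.
  - apply goursat_rect; [exact Hab | exact Hcd |]. intros x y Hx Hy.
    apply HD; [exact Hx | exact Hy |]. intros E. injection E. lra.
Qed.

(* Cutting off the four side strips, each of which is flat or misses the
   point [(p1, p2)], leaves only the middle rectangle. *)
Lemma rect_integral_excise (a b c d a' b' c' d' : R) :
  C_continuous_on_rect F a b c d -> C_derivable_on_rect_except a b c d ->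
  a <= a' <= p1 -> p1 <= b' <= b -> c <= c' <= p2 -> p2 <= d' <= d ->
  (a' = a \/ a' < p1) -> (b' = b \/ p1 < b') -> (c' = c \/ c' < p2) -> (d' = d \/ p2 < d') ->
  rect_integral F a b c d = rect_integral F a' b' c' d'.
Proof.
  intros HC HD Ha Hb Hc Hd Ha' Hb' Hc' Hd'.
  assert (Hsub : forall x1 x2 y1 y2, a <= x1 -> x2 <= b -> c <= y1 -> y2 <= d ->
            C_derivable_on_rect_except x1 x2 y1 y2).
  { intros x1 x2 y1 y2 ? ? ? ? x y ? ?. apply HD; lra. }
  assert (Hbd : forall x1 x2 y1 y2, a <= x1 <= x2 -> x2 <= b -> c <= y1 <= y2 -> y2 <= d ->
            C_continuous_on_rect_boundary F x1 x2 y1 y2).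
  { intros. apply C_continuous_on_rect_boundary_of_rect; [| lra | lra].
    eapply C_continuous_on_subrect; [exact HC | ..]; lra. }
  rewrite (rect_integral_split_x F a a' b c d), (rect_integral_split_x F a' b' b c d),
    (rect_integral_split_y F a' b' c c' d), (rect_integral_split_y F a' b' c' d' d)
    by first [apply Hbd; lra | lra].
  rewrite (rect_integral_eq0_off_point a a' c d), (rect_integral_eq0_off_point b' b c d),
    (rect_integral_eq0_off_point a' b' c c'), (rect_integral_eq0_off_point a' b' d' d)
    by first [lra | apply Hsub; lra].
  ring.
Qed.

Theorem goursat_rect_punctured (a b c d : R) : a <= b -> c <= d ->
  C_continuous_on_rect F a b c d -> C_derivable_on_rect_except a b c d ->
  rect_integral F a b c d = RtoC 0.
Proof.
  intros Hab Hcd HC HD.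
  destruct (Rle_dec a p1); [| apply rect_integral_eq0_off_point; auto; lra].
  destruct (Rle_dec p1 b); [| apply rect_integral_eq0_off_point; auto; lra].
  destruct (Rle_dec c p2); [| apply rect_integral_eq0_off_point; auto; lra].
  destruct (Rle_dec p2 d); [| apply rect_integral_eq0_off_point; auto; lra].
  destruct (HC p1 p2 ltac:(lra) ltac:(lra) 1 Rlt_0_1) as [d0 [Hd0 Hnear]].
  set (M := Cmod (F (p1, p2)) + 1).
  assert (HM : 0 <= M) by (unfold M; pose proof (Cmod_ge_0 (F (p1, p2))); lra).
  apply Cmod_le_eps_eq0 with (8 * M); [lra |].
  intros eps Heps. set (del := Rmin (d0 / 4) eps).
  assert (Hdel : 0 < del) by (apply Rmin_pos; lra).
  pose proof (Rmin_l (d0 / 4) eps). pose proof (Rmin_r (d0 / 4) eps). fold del in H, H0.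
  set (a' := Rmax a (p1 - del)). set (b' := Rmin b (p1 + del)).
  set (c' := Rmax c (p2 - del)). set (d' := Rmin d (p2 + del)).
  assert (Ha' : a <= a' <= p1 /\ p1 - del <= a' /\ (a' = a \/ a' < p1)).
  { unfold a', Rmax. destruct Rle_dec; lra. }
  assert (Hb' : p1 <= b' <= b /\ b' <= p1 + del /\ (b' = b \/ p1 < b')).
  { unfold b', Rmin. destruct Rle_dec; lra. }
  assert (Hc' : c <= c' <= p2 /\ p2 - del <= c' /\ (c' = c \/ c' < p2)).
  { unfold c', Rmax. destruct Rle_dec; lra. }
  assert (Hd' : p2 <= d' <= d /\ d' <= p2 + del /\ (d' = d \/ p2 < d')).
  { unfold d', Rmin. destruct Rle_dec; lra. }
  rewrite (rect_integral_excise a b c d a' b' c' d') by tauto.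
  eapply Rle_trans; [apply rect_integral_norm_le with (M := M) |].
  - apply C_continuous_on_rect_boundary_of_rect; [| lra | lra].
    eapply C_continuous_on_subrect; [exact HC | ..]; lra.
  - lra.
  - lra.
  - intros x y Hxy.
    assert (Hp : Cmod (Cminus (x, y) (p1, p2)) < d0).
    { rewrite Cminus_pair. eapply Rle_lt_trans; [apply Cmod_pair_le |].
      unfold on_rect_boundary in Hxy. unfold Rabs; repeat destruct Rcase_abs; lra. }
    specialize (Hnear _ Hp).
    replace (F (x, y)) with (Cplus (Cminus (F (x, y)) (F (p1, p2))) (F (p1, p2))) by ring.
    eapply Rle_trans; [apply Cmod_triangle | unfold M; lra].
  - assert (0 <= 2 * ((b' - a') + (d' - c')) <= 8 * eps) by lra. nra.
Qed.

End Punctured.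

(** * The Cauchy integral formula on squares *)

Lemma C_continuous_segment_bounded (F : C -> C) (p v : C) (a b : R) : a <= b ->
  (forall t, a <= t <= b -> C_continuous_at F (Cplus p (Cmult (RtoC t) v))) ->
  exists M, forall t, a <= t <= b -> Cmod (F (Cplus p (Cmult (RtoC t) v))) <= M.
Proof.
  intros Hab H.
  destruct (continuity_ab_maj (fun s => Cmod (F (Cplus p (Cmult (RtoC s) v)))) a b Hab) as [t [Ht _]].
  - intros s Hs. now apply C_continuous_line_Cmod, H.
  - now exists (Cmod (F (Cplus p (Cmult (RtoC t) v)))).
Qed.

Lemma C_continuous_on_rect_boundary_bounded (F : C -> C) (a b c d : R) : a <= b -> c <= d ->
  C_continuous_on_rect_boundary F a b c d ->
  exists M, forall x y, on_rect_boundary a b c d x y -> Cmod (F (x, y)) <= M.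
Proof.
  intros Hab Hcd H.
  assert (Hh : forall y, y = c \/ y = d -> exists M, forall x, a <= x <= b -> Cmod (F (x, y)) <= M).
  { intros y Hy. destruct (C_continuous_segment_bounded F ((0%R, y) : C) (RtoC 1) a b Hab) as [M HM].
    - intros t Ht. rewrite <- point_horizontal. apply H. unfold on_rect_boundary. tauto.
    - exists M. intros x Hx. rewrite (point_horizontal x y). now apply HM. }
  assert (Hv : forall x, x = a \/ x = b -> exists M, forall y, c <= y <= d -> Cmod (F (x, y)) <= M).
  { intros x Hx. destruct (C_continuous_segment_bounded F (RtoC x) Ci c d Hcd) as [M HM].
    - intros t Ht. rewrite <- point_vertical. apply H. unfold on_rect_boundary. tauto.
    - exists M. intros y Hy. rewrite (point_vertical x y). now apply HM. }
  destruct (Hh c (or_introl eq_refl)) as [M1 H1], (Hh d (or_intror eq_refl)) as [M2 H2].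
  destruct (Hv a (or_introl eq_refl)) as [M3 H3], (Hv b (or_intror eq_refl)) as [M4 H4].
  exists (Rmax (Rmax M1 M2) (Rmax M3 M4)). intros x y Hxy.
  pose proof (Rmax_l M1 M2). pose proof (Rmax_r M1 M2). pose proof (Rmax_l M3 M4). pose proof (Rmax_r M3 M4).
  pose proof (Rmax_l (Rmax M1 M2) (Rmax M3 M4)). pose proof (Rmax_r (Rmax M1 M2) (Rmax M3 M4)).
  destruct Hxy as [[Hx [-> | ->]] | [[-> | ->] Hy]];
    [specialize (H1 x Hx) | specialize (H2 x Hx) | specialize (H3 y Hy) | specialize (H4 y Hy)]; lra.
Qed.

Section ParamDerive.

(* Differentiation under the integral sign: [HK] bounds the first order
   Taylor remainder of [K s] at [z] uniformly on the boundary. *)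
Variables (phi : C -> C) (K K' : C -> C -> C) (a b c d r C0 M : R) (z : C).
Hypotheses (Hab : a <= b) (Hcd : c <= d).
Hypothesis HKw : forall w, Cmod (Cminus w z) < r ->
  C_continuous_on_rect_boundary (fun s => Cmult (phi s) (K s w)) a b c d.
Hypothesis HK' : C_continuous_on_rect_boundary (fun s => Cmult (phi s) (K' s z)) a b c d.
Hypothesis HM : forall x y, on_rect_boundary a b c d x y -> Cmod (phi (x, y)) <= M.
Hypothesis HK : forall w, Cmod (Cminus w z) < r -> forall x y, on_rect_boundary a b c d x y ->
  Cmod (Cminus (Cminus (K (x, y) w) (K (x, y) z)) (Cmult (Cminus w z) (K' (x, y) z)))
    <= C0 * (Cmod (Cminus w z) * Cmod (Cminus w z)).

Let I (w : C) : C := rect_integral (fun s => Cmult (phi s) (K s w)) a b c d.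
Let I' : C := rect_integral (fun s => Cmult (phi s) (K' s z)) a b c d.

Lemma rect_integral_param_remainder_le (w : C) : Cmod (Cminus w z) < r ->
  Cmod (Cminus (Cminus (I w) (I z)) (Cmult (Cminus w z) I'))
    <= 2 * ((b - a) + (d - c)) * (Rabs M * Rabs C0) * (Cmod (Cminus w z) * Cmod (Cminus w z)).
Proof.
  intros Hw. set (m := Cmod (Cminus w z)) in *. assert (Hm : 0 <= m) by apply Cmod_ge_0.
  assert (Hzr : Cmod (Cminus z z) < r) by (unfold Cminus; rewrite Cplus_opp_r, Cmod_0; lra).
  set (A := fun s => Cmult (phi s) (K s w)). set (B := fun s => Cmult (phi s) (K s z)).
  set (E := fun s => Cmult (Cminus w z) (Cmult (phi s) (K' s z))).
  assert (HA : C_continuous_on_rect_boundary A a b c d) by now apply HKw.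
  assert (HB : C_continuous_on_rect_boundary B a b c d) by now apply HKw.
  assert (HE : C_continuous_on_rect_boundary E a b c d).
  { intros x y Hxy. apply C_continuous_mult; [apply C_continuous_const | now apply HK']. }
  assert (HAB : C_continuous_on_rect_boundary (fun s => Cminus (A s) (B s)) a b c d).
  { intros x y Hxy. apply C_continuous_minus; [now apply HA | now apply HB]. }
  unfold I, I'. rewrite <- (rect_integral_Cmult_l _ (Cminus w z)), <- (rect_integral_minus A B),
    <- rect_integral_minus by assumption.
  replace (2 * (b - a + (d - c)) * (Rabs M * Rabs C0) * (m * m))
    with (2 * (b - a + (d - c)) * (Rabs M * (Rabs C0 * (m * m)))) by ring.
  apply rect_integral_norm_le; [| assumption | assumption |].
  - intros x y Hxy. apply C_continuous_minus; [now apply HAB | now apply HE].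
  - intros x y Hxy. unfold A, B, E.
    replace (Cminus (Cminus (Cmult (phi (x, y)) (K (x, y) w)) (Cmult (phi (x, y)) (K (x, y) z)))
               (Cmult (Cminus w z) (Cmult (phi (x, y)) (K' (x, y) z))))
      with (Cmult (phi (x, y)) (Cminus (Cminus (K (x, y) w) (K (x, y) z)) (Cmult (Cminus w z) (K' (x, y) z))))
      by ring.
    rewrite Cmod_mult. apply Rmult_le_compat; try apply Cmod_ge_0.
    + eapply Rle_trans; [now apply HM | apply RRle_abs].
    + eapply Rle_trans; [now apply HK |]. apply Rmult_le_compat_r; [nra | apply RRle_abs].
Qed.

Lemma rect_integral_param_derive : 0 < r -> C_is_derive I z I'.
Proof.
  intros Hr. apply C_is_derive_eps. intros eps Heps.
  set (Kc := 2 * ((b - a) + (d - c)) * (Rabs M * Rabs C0)).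
  assert (HKc : 0 <= Kc).
  { unfold Kc. pose proof (Rabs_pos M). pose proof (Rabs_pos C0).
    apply Rmult_le_pos; [lra | now apply Rmult_le_pos]. }
  exists (Rmin r (eps / (Kc + 1))). split; [apply Rmin_pos; [exact Hr | apply Rdiv_lt_0_compat; lra] |].
  intros w Hw. set (m := Cmod (Cminus w z)). assert (0 <= m) by apply Cmod_ge_0.
  assert (Hwe : m * (Kc + 1) < eps).
  { apply (Rmult_lt_reg_r (/ (Kc + 1))); [apply Rinv_0_lt_compat; lra |].
    rewrite Rmult_assoc, Rinv_r, Rmult_1_r by lra. eapply Rlt_le_trans; [exact Hw | apply Rmin_r]. }
  eapply Rle_trans; [apply rect_integral_param_remainder_le; eapply Rlt_le_trans; [exact Hw | apply Rmin_l] |].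
  fold Kc m. nra.
Qed.

End ParamDerive.

Lemma Cinv_Cminus_remainder_le (a h : C) (rho : R) : 0 < rho -> rho <= Cmod a -> Cmod h < rho / 2 ->
  Cmod (Cminus (Cminus (Cinv (Cminus a h)) (Cinv a)) (Cmult h (Cinv (Cmult a a))))
    <= 2 / (rho * rho * rho) * (Cmod h * Cmod h).
Proof.
  intros Hr Ha Hh.
  assert (Hah : rho / 2 <= Cmod (Cminus a h)) by (pose proof (Cmod_Cminus_ge a h); lra).
  assert (a <> RtoC 0) by (intros E; rewrite E, Cmod_0 in Ha; lra).
  assert (Cminus a h <> RtoC 0) by (intros E; rewrite E, Cmod_0 in Hah; lra).
  replace (Cminus (Cminus (Cinv (Cminus a h)) (Cinv a)) (Cmult h (Cinv (Cmult a a)))) with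
    (Cdiv (Cmult h h) (Cmult (Cmult a a) (Cminus a h))) by (field; auto).
  rewrite Cmod_div, !Cmod_mult by (repeat apply Cmult_neq_0; auto).
  set (x := Cmod a) in *. set (y := Cmod (Cminus a h)) in *. set (m := Cmod h) in *.
  assert (0 <= m) by apply Cmod_ge_0.
  assert (P : rho * rho * (rho / 2) <= x * x * y) by (apply Rmult_le_compat; nra).
  assert (0 < rho * rho * (rho / 2)) by (repeat apply Rmult_lt_0_compat; lra).
  replace (2 / (rho * rho * rho) * (m * m)) with (m * m / (rho * rho * (rho / 2))) by (field; lra).
  unfold Rdiv. apply Rmult_le_compat_l; [nra | now apply Rinv_le_contravar].
Qed.

Lemma Cinv_sqr_Cminus_remainder_le (a h : C) (rho : R) : 0 < rho -> rho <= Cmod a -> Cmod h < rho / 2 ->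
  Cmod (Cminus (Cminus (Cinv (Cmult (Cminus a h) (Cminus a h))) (Cinv (Cmult a a)))
     (Cmult h (Cmult (RtoC 2) (Cinv (Cmult a (Cmult a a))))))
    <= 16 / (rho * rho * rho * rho) * (Cmod h * Cmod h).
Proof.
  intros Hr Ha Hh.
  assert (Hah : rho / 2 <= Cmod (Cminus a h)) by (pose proof (Cmod_Cminus_ge a h); lra).
  assert (a <> RtoC 0) by (intros E; rewrite E, Cmod_0 in Ha; lra).
  assert (Cminus a h <> RtoC 0) by (intros E; rewrite E, Cmod_0 in Hah; lra).
  replace (Cminus (Cminus (Cinv (Cmult (Cminus a h) (Cminus a h))) (Cinv (Cmult a a)))
     (Cmult h (Cmult (RtoC 2) (Cinv (Cmult a (Cmult a a)))))) with
    (Cdiv (Cmult (Cmult h h) (Cminus (Cmult (RtoC 3) a) (Cmult (RtoC 2) h)))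
          (Cmult (Cmult a (Cmult a a)) (Cmult (Cminus a h) (Cminus a h)))) by (field; auto).
  rewrite Cmod_div, !Cmod_mult by (repeat apply Cmult_neq_0; auto).
  assert (Hn : Cmod (Cminus (Cmult (RtoC 3) a) (Cmult (RtoC 2) h)) <= 4 * Cmod a).
  { eapply Rle_trans; [apply Cmod_Cminus_le |]. rewrite !Cmod_mult, !Cmod_R, !Rabs_pos_eq by lra. lra. }
  set (x := Cmod a) in *. set (y := Cmod (Cminus a h)) in *. set (m := Cmod h) in *.
  set (n := Cmod (Cminus (Cmult (RtoC 3) a) (Cmult (RtoC 2) h))) in *.
  assert (0 <= m) by apply Cmod_ge_0. assert (0 <= n) by apply Cmod_ge_0.
  assert (0 < x) by lra. assert (0 < y) by lra.
  apply Rle_trans with (m * m * (4 * x) / (x * (x * x) * (y * y))).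
  { unfold Rdiv. apply Rmult_le_compat_r; [left; apply Rinv_0_lt_compat; repeat apply Rmult_lt_0_compat; lra |].
    apply Rmult_le_compat_l; nra. }
  replace (m * m * (4 * x) / (x * (x * x) * (y * y))) with (m * m * (4 / (x * x * (y * y)))) by (field; lra).
  replace (16 / (rho * rho * rho * rho) * (m * m)) with (m * m * (4 / (rho * rho * ((rho / 2) * (rho / 2)))))
    by (field; lra).
  apply Rmult_le_compat_l; [nra |]. unfold Rdiv. apply Rmult_le_compat_l; [lra |].
  apply Rinv_le_contravar; [assert (0 < rho * rho) by nra; assert (0 < (rho / 2) * (rho / 2)) by nra; nra |].
  apply Rmult_le_compat; nra.
Qed.

Definition cauchy_kernel (s w : C) : C := Cinv (Cminus s w).
Definition cauchy_kernel_d1 (s w : C) : C := Cinv (Cmult (Cminus s w) (Cminus s w)).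
Definition cauchy_kernel_d2 (s w : C) : C :=
  Cmult (RtoC 2) (Cinv (Cmult (Cminus s w) (Cmult (Cminus s w) (Cminus s w)))).

Lemma C_is_derive_sub_const (w s : C) : C_is_derive (fun s => Cminus s w) s (RtoC 1).
Proof.
  eapply C_is_derive_change; [apply C_is_derive_minus; [apply C_is_derive_id | apply C_is_derive_const] |].
  ring.
Qed.

Lemma C_continuous_cauchy_kernel (s w : C) : s <> w -> C_continuous_at (fun s => cauchy_kernel s w) s.
Proof.
  intros H. eapply C_is_derive_continuous. unfold cauchy_kernel.
  apply C_is_derive_inv; [apply C_is_derive_sub_const | now apply Cminus_neq_0].
Qed.

Lemma C_continuous_cauchy_kernel_d1 (s w : C) : s <> w -> C_continuous_at (fun s => cauchy_kernel_d1 s w) s.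
Proof.
  intros H. eapply C_is_derive_continuous. unfold cauchy_kernel_d1.
  apply C_is_derive_inv; [apply C_is_derive_mult; apply C_is_derive_sub_const |].
  apply Cmult_neq_0; now apply Cminus_neq_0.
Qed.

Lemma C_continuous_cauchy_kernel_d2 (s w : C) : s <> w -> C_continuous_at (fun s => cauchy_kernel_d2 s w) s.
Proof.
  intros H. eapply C_is_derive_continuous. unfold cauchy_kernel_d2.
  apply C_is_derive_mult; [apply C_is_derive_const |].
  apply C_is_derive_inv.
  - apply C_is_derive_mult; [| apply C_is_derive_mult]; apply C_is_derive_sub_const.
  - repeat apply Cmult_neq_0; now apply Cminus_neq_0.
Qed.

(* The value [l] at [s = z] is meant to be [f'(z)], making the quotient continuous there. *)
Definition difference_quotient (f : C -> C) (z l s : C) : C :=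
  if excluded_middle_informative (s = z) then l else Cmult (Cminus (f s) (f z)) (cauchy_kernel s z).

Lemma difference_quotient_neq (f : C -> C) (z l s : C) : s <> z ->
  difference_quotient f z l s = Cmult (Cminus (f s) (f z)) (cauchy_kernel s z).
Proof. intros Hs. unfold difference_quotient. now destruct excluded_middle_informative. Qed.

Lemma difference_quotient_derivable (f : C -> C) (z l s lf : C) : s <> z -> C_is_derive f s lf ->
  exists l', C_is_derive (difference_quotient f z l) s l'.
Proof.
  intros Hs Hf. eexists.
  apply C_is_derive_loc with (f := fun w => Cmult (Cminus (f w) (f z)) (cauchy_kernel w z))
    (r := Cmod (Cminus s z)).
  - now apply Cmod_gt_0, Cminus_neq_0.
  - intros w Hw. symmetry. apply difference_quotient_neq. intros ->. rewrite Cmod_Cminus_sym in Hw. lra.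
  - apply C_is_derive_mult.
    + apply C_is_derive_minus; [exact Hf | apply C_is_derive_const].
    + apply C_is_derive_inv; [apply C_is_derive_sub_const | now apply Cminus_neq_0].
Qed.

Lemma difference_quotient_continuous (f : C -> C) (z l : C) :
  C_is_derive f z l -> C_continuous_at (difference_quotient f z l) z.
Proof.
  rewrite C_is_derive_eps. intros Hl eps Heps.
  destruct (Hl (eps / 2)) as [d [Hd H1]]; [lra |].
  exists d. split; [exact Hd |]. intros w Hw.
  assert (Hz : difference_quotient f z l z = l)
    by (unfold difference_quotient; now destruct excluded_middle_informative).
  rewrite Hz. destruct (excluded_middle_informative (w = z)) as [-> | E].
  - rewrite Hz. unfold Cminus. rewrite Cplus_opp_r, Cmod_0. lra.
  - rewrite difference_quotient_neq by exact E. specialize (H1 w Hw).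
    assert (Hwz : Cminus w z <> RtoC 0) by now apply Cminus_neq_0.
    assert (0 < Cmod (Cminus w z)) by now apply Cmod_gt_0.
    unfold cauchy_kernel.
    replace (Cminus (Cmult (Cminus (f w) (f z)) (Cinv (Cminus w z))) l) with
      (Cdiv (Cminus (Cminus (f w) (f z)) (Cmult (Cminus w z) l)) (Cminus w z)) by (field; auto).
    rewrite Cmod_div by exact Hwz.
    apply Rle_lt_trans with (eps / 2); [| lra].
    apply (Rmult_le_reg_r (Cmod (Cminus w z))); [assumption |].
    unfold Rdiv. rewrite Rmult_assoc, Rinv_l by lra. lra.
Qed.

Lemma Rabs_coord_le_Cmod (w z : C) :
  Rabs (fst w - fst z) <= Cmod (Cminus w z) /\ Rabs (snd w - snd z) <= Cmod (Cminus w z).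
Proof.
  destruct w as [w1 w2], z as [z1 z2]. rewrite Cminus_pair.
  pose proof (Rmax_Cmod ((w1 - z1, w2 - z2)%R : C)). simpl in *.
  pose proof (Rmax_l (Rabs (w1 - z1)) (Rabs (w2 - z2))). pose proof (Rmax_r (Rabs (w1 - z1)) (Rabs (w2 - z2))).
  lra.
Qed.

Section Square.

Variables (x0 y0 rho : R).
Hypothesis rho_pos : 0 < rho.

Let square_integral (F : C -> C) : C :=
  rect_integral F (x0 - rho) (x0 + rho) (y0 - rho) (y0 + rho).

Let on_square_boundary (x y : R) : Prop :=
  on_rect_boundary (x0 - rho) (x0 + rho) (y0 - rho) (y0 + rho) x y.

Let in_inner_square (z : C) : Prop := Rabs (fst z - x0) < rho / 2 /\ Rabs (snd z - y0) < rho / 2.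

Lemma inner_square_in_square (z : C) : in_inner_square z ->
  x0 - rho <= fst z <= x0 + rho /\ y0 - rho <= snd z <= y0 + rho.
Proof. intros [H1 H2]. revert H1 H2. unfold Rabs. repeat destruct Rcase_abs; intros; lra. Qed.

Lemma inner_square_open (z : C) : in_inner_square z ->
  exists r, 0 < r /\ forall w, Cmod (Cminus w z) < r -> in_inner_square w.
Proof.
  intros [H1 H2]. exists (Rmin (rho / 2 - Rabs (fst z - x0)) (rho / 2 - Rabs (snd z - y0))).
  split; [apply Rmin_pos; lra |]. intros w Hw.
  pose proof (Rmin_l (rho / 2 - Rabs (fst z - x0)) (rho / 2 - Rabs (snd z - y0))).
  pose proof (Rmin_r (rho / 2 - Rabs (fst z - x0)) (rho / 2 - Rabs (snd z - y0))).
  destruct (Rabs_coord_le_Cmod w z) as [c1 c2].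
  pose proof (Rabs_triang (fst w - fst z) (fst z - x0)). pose proof (Rabs_triang (snd w - snd z) (snd z - y0)).
  replace (fst w - fst z + (fst z - x0)) with (fst w - x0) in H3 by ring.
  replace (snd w - snd z + (snd z - y0)) with (snd w - y0) in H4 by ring.
  split; lra.
Qed.

Lemma boundary_far_from_inner_square (z : C) (x y : R) : in_inner_square z -> on_square_boundary x y ->
  rho / 2 <= Cmod (Cminus (x, y) z).
Proof.
  intros [Hz1 Hz2] Hb. eapply Rle_trans; [| apply Rmax_Cmod].
  destruct z as [z1 z2]. simpl in Hz1, Hz2. rewrite Cminus_pair. simpl.
  unfold on_square_boundary, on_rect_boundary in Hb.
  revert Hz1 Hz2. unfold Rabs, Rmax. repeat destruct Rcase_abs; repeat destruct Rle_dec; intros; lra.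
Qed.

Lemma boundary_neq_near_inner_square (z w : C) (x y : R) : in_inner_square z -> on_square_boundary x y ->
  Cmod (Cminus w z) < rho / 4 -> ((x, y) : C) <> w.
Proof.
  intros Hz Hb Hw E. subst w.
  pose proof (boundary_far_from_inner_square z x y Hz Hb). lra.
Qed.

Lemma center_in_inner_square : in_inner_square (x0, y0).
Proof. split; simpl; rewrite Rminus_diag, Rabs_R0; lra. Qed.

Lemma square_integral_cauchy_kernel_derive (phi : C -> C) (z : C) :
  C_continuous_on_rect_boundary phi (x0 - rho) (x0 + rho) (y0 - rho) (y0 + rho) -> in_inner_square z ->
  C_is_derive (fun w => square_integral (fun s => Cmult (phi s) (cauchy_kernel s w))) z
    (square_integral (fun s => Cmult (phi s) (cauchy_kernel_d1 s z))).
Proof.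
  intros Hphi Hz.
  destruct (C_continuous_on_rect_boundary_bounded phi (x0 - rho) (x0 + rho) (y0 - rho) (y0 + rho))
    as [M HM]; [lra | lra | exact Hphi |].
  unfold square_integral. apply rect_integral_param_derive with (r := rho / 4) (M := M)
    (C0 := 2 / ((rho / 2) * (rho / 2) * (rho / 2))); [lra | lra | | | exact HM | | lra].
  - intros w Hw x y Hb. apply C_continuous_mult; [now apply Hphi |].
    apply C_continuous_cauchy_kernel. now apply (boundary_neq_near_inner_square z).
  - intros x y Hb. apply C_continuous_mult; [now apply Hphi |].
    apply C_continuous_cauchy_kernel_d1. apply (boundary_neq_near_inner_square z); try assumption.
    unfold Cminus. rewrite Cplus_opp_r, Cmod_0. lra.
  - intros w Hw x y Hb. unfold cauchy_kernel, cauchy_kernel_d1.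
    replace (Cminus (x, y) w) with (Cminus (Cminus (x, y) z) (Cminus w z)) by ring.
    apply Cinv_Cminus_remainder_le; [lra | now apply boundary_far_from_inner_square | lra].
Qed.

Lemma square_integral_cauchy_kernel_d1_derive (phi : C -> C) (z : C) :
  C_continuous_on_rect_boundary phi (x0 - rho) (x0 + rho) (y0 - rho) (y0 + rho) -> in_inner_square z ->
  C_is_derive (fun w => square_integral (fun s => Cmult (phi s) (cauchy_kernel_d1 s w))) z
    (square_integral (fun s => Cmult (phi s) (cauchy_kernel_d2 s z))).
Proof.
  intros Hphi Hz.
  destruct (C_continuous_on_rect_boundary_bounded phi (x0 - rho) (x0 + rho) (y0 - rho) (y0 + rho))
    as [M HM]; [lra | lra | exact Hphi |].
  unfold square_integral. apply rect_integral_param_derive with (r := rho / 4) (M := M)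
    (C0 := 16 / ((rho / 2) * (rho / 2) * (rho / 2) * (rho / 2))); [lra | lra | | | exact HM | | lra].
  - intros w Hw x y Hb. apply C_continuous_mult; [now apply Hphi |].
    apply C_continuous_cauchy_kernel_d1. now apply (boundary_neq_near_inner_square z).
  - intros x y Hb. apply C_continuous_mult; [now apply Hphi |].
    apply C_continuous_cauchy_kernel_d2. apply (boundary_neq_near_inner_square z); try assumption.
    unfold Cminus. rewrite Cplus_opp_r, Cmod_0. lra.
  - intros w Hw x y Hb. unfold cauchy_kernel_d1, cauchy_kernel_d2.
    replace (Cminus (x, y) w) with (Cminus (Cminus (x, y) z) (Cminus w z)) by ring.
    apply Cinv_sqr_Cminus_remainder_le; [lra | now apply boundary_far_from_inner_square | lra].
Qed.

Lemma boundary_neq_inner_square (z : C) (x y : R) : in_inner_square z -> on_square_boundary x y ->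
  ((x, y) : C) <> z.
Proof.
  intros Hz Hb. apply (boundary_neq_near_inner_square z); try assumption.
  unfold Cminus. rewrite Cplus_opp_r, Cmod_0. lra.
Qed.

(* The difference quotient is continuous on the square and holomorphic off
   [z], so its integral vanishes by the punctured Goursat theorem. *)
Lemma square_integral_cauchy_formula (f : C -> C) (z : C) :
  (forall x y, x0 - rho <= x <= x0 + rho -> y0 - rho <= y <= y0 + rho ->
     exists l, C_is_derive f (x, y) l) ->
  in_inner_square z ->
  square_integral (fun s => Cmult (f s) (cauchy_kernel s z)) =
  Cmult (f z) (square_integral (fun s => cauchy_kernel s z)).
Proof.
  intros HD Hz. unfold square_integral.
  destruct (inner_square_in_square z Hz) as [Hz1 Hz2].
  destruct (HD (fst z) (snd z) Hz1 Hz2) as [l Hl]. rewrite <- surjective_pairing in Hl.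
  set (q := difference_quotient f z l).
  assert (HDq : C_derivable_on_rect_except q (fst z) (snd z) (x0 - rho) (x0 + rho) (y0 - rho) (y0 + rho)).
  { intros x y Hx Hy Hn. rewrite <- surjective_pairing in Hn.
    destruct (HD x y Hx Hy) as [lf Hf]. exact (difference_quotient_derivable f z l _ lf Hn Hf). }
  assert (HCq : C_continuous_on_rect q (x0 - rho) (x0 + rho) (y0 - rho) (y0 + rho)).
  { intros x y Hx Hy. destruct (excluded_middle_informative (((x, y) : C) = z)) as [-> | E].
    - exact (difference_quotient_continuous f z l Hl).
    - destruct (HDq x y Hx Hy) as [l' Hl']; [now rewrite <- surjective_pairing |].
      exact (C_is_derive_continuous _ _ _ Hl'). }
  assert (H0 : rect_integral q (x0 - rho) (x0 + rho) (y0 - rho) (y0 + rho) = RtoC 0)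
    by (apply (goursat_rect_punctured q (fst z) (snd z)); [lra | lra | exact HCq | exact HDq]).
  assert (HK : C_continuous_on_rect_boundary (fun s => cauchy_kernel s z) (x0 - rho) (x0 + rho) (y0 - rho) (y0 + rho)).
  { intros x y Hb. now apply C_continuous_cauchy_kernel, boundary_neq_inner_square. }
  assert (HfK : C_continuous_on_rect_boundary (fun s => Cmult (f s) (cauchy_kernel s z))
                  (x0 - rho) (x0 + rho) (y0 - rho) (y0 + rho)).
  { intros x y Hb. apply C_continuous_mult; [| now apply HK].
    destruct (HD x y) as [lf Hf]; [unfold on_rect_boundary in Hb; lra .. |].
    exact (C_is_derive_continuous _ _ _ Hf). }
  assert (HkK : C_continuous_on_rect_boundary (fun s => Cmult (f z) (cauchy_kernel s z))
                  (x0 - rho) (x0 + rho) (y0 - rho) (y0 + rho)).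
  { intros x y Hb. apply C_continuous_mult; [apply C_continuous_const | now apply HK]. }
  rewrite (rect_integral_ext q (fun s => Cminus (Cmult (f s) (cauchy_kernel s z)) (Cmult (f z) (cauchy_kernel s z))))
    in H0 by (try lra; intros x y Hb; unfold q; rewrite difference_quotient_neq by (now apply boundary_neq_inner_square); ring).
  rewrite rect_integral_minus, rect_integral_Cmult_l in H0 by (assumption || lra).
  set (A := rect_integral (fun s => Cmult (f s) (cauchy_kernel s z)) _ _ _ _) in *.
  set (B := rect_integral (fun s => cauchy_kernel s z) _ _ _ _) in *.
  transitivity (Cplus (Cminus A (Cmult (f z) B)) (Cmult (f z) B)); [ring | rewrite H0; ring].
Qed.

(* The [w]-derivative [s |-> 1 / (s - w) ^ 2] of the kernel has the
   primitive [s |-> - 1 / (s - w)], hence integrates to zero. *)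
Lemma square_integral_cauchy_kernel_const (z : C) : in_inner_square z ->
  square_integral (fun s => cauchy_kernel s z) = square_integral (fun s => cauchy_kernel s (x0, y0)).
Proof.
  intros Hz.
  assert (Hb1 : C_continuous_on_rect_boundary (fun _ => RtoC 1) (x0 - rho) (x0 + rho) (y0 - rho) (y0 + rho))
    by (intros x y _; apply C_continuous_const).
  assert (Hder : forall w, in_inner_square w ->
            C_is_derive (fun w => square_integral (fun s => cauchy_kernel s w)) w (RtoC 0)).
  { intros w Hw. pose proof (square_integral_cauchy_kernel_derive _ w Hb1 Hw) as H.
    unfold square_integral in H |- *. eapply C_is_derive_change.
    - eapply C_is_derive_loc with (r := 1); [lra | | exact H].
      intros u _. cbv beta. f_equal. apply functional_extensionality. intros s. ring.
    - apply rect_integral_primitive with (F := fun s => Cminus (RtoC 0) (cauchy_kernel s w)); [lra | lra | |].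
      + intros x y Hb. pose proof (boundary_neq_inner_square w x y Hw Hb).
        eapply C_is_derive_change.
        * apply C_is_derive_minus; [apply C_is_derive_const |]. unfold cauchy_kernel.
          apply C_is_derive_inv; [apply C_is_derive_sub_const | now apply Cminus_neq_0].
        * unfold cauchy_kernel_d1. field. now apply Cminus_neq_0.
      + intros x y Hb. apply C_continuous_mult; [apply C_continuous_const |].
        now apply C_continuous_cauchy_kernel_d1, boundary_neq_inner_square. }
  pose proof (C_is_derive_segment_const (fun w => square_integral (fun s => cauchy_kernel s w))
                (x0, y0) (Cminus z (x0, y0))) as H.
  replace (Cplus (x0, y0) (Cminus z (x0, y0))) with z in H by ring.
  apply H. intros t Ht. apply Hder.
  destruct z as [z1 z2], Hz as [H1 H2]. simpl in H1, H2.
  replace (Cplus (x0, y0) (Cmult (RtoC t) (Cminus (z1, z2) (x0, y0))))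
    with ((x0 + t * (z1 - x0), y0 + t * (z2 - y0))%R : C)
    by (unfold Cplus, Cmult, Cminus, Copp, RtoC; simpl; f_equal; ring).
  split; simpl.
  - replace (x0 + t * (z1 - x0) - x0) with (t * (z1 - x0)) by ring.
    rewrite Rabs_mult, (Rabs_pos_eq t) by lra. pose proof (Rabs_pos (z1 - x0)). nra.
  - replace (y0 + t * (z2 - y0) - y0) with (t * (z2 - y0)) by ring.
    rewrite Rabs_mult, (Rabs_pos_eq t) by lra. pose proof (Rabs_pos (z2 - y0)). nra.
Qed.

Lemma continuous_Poisson (u t : R) : continuous (fun t => rho / ((t - u) ^ 2 + rho ^ 2)) t.
Proof.
  apply (ex_derive_continuous (K:=R_AbsRing) (V:=R_NormedModule)). auto_derive.
  pose proof (pow2_ge_0 (t - u)). pose proof (pow_lt rho 2 rho_pos). lra.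
Qed.

Lemma RInt_Poisson_pos (u a b : R) : a < b -> 0 < RInt (fun t => rho / ((t - u) ^ 2 + rho ^ 2)) a b.
Proof.
  intros Hab. apply RInt_gt_0; [exact Hab | | intros; apply continuous_Poisson].
  intros t _. apply Rdiv_lt_0_compat; [exact rho_pos |].
  pose proof (pow2_ge_0 (t - u)). pose proof (pow_lt rho 2 rho_pos). lra.
Qed.

(* Each side contributes the positive [rho / ((t - u) ^ 2 + rho ^ 2)] to the
   imaginary part (the integral is in fact [2 * PI * i]). *)
Lemma square_integral_cauchy_kernel_neq0 : square_integral (fun s => cauchy_kernel s (x0, y0)) <> RtoC 0.
Proof.
  unfold square_integral. intros E. set (G := fun s => cauchy_kernel s (x0, y0)) in E.
  assert (HG : C_continuous_on_rect_boundary G (x0 - rho) (x0 + rho) (y0 - rho) (y0 + rho)).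
  { intros x y Hb. apply C_continuous_cauchy_kernel, boundary_neq_inner_square; [apply center_in_inner_square | exact Hb]. }
  assert (HIm : Im (rect_integral G (x0 - rho) (x0 + rho) (y0 - rho) (y0 + rho)) =
     RInt (fun t => Im (G (t, y0 - rho))) (x0 - rho) (x0 + rho) + RInt (fun t => Re (G (x0 + rho, t))) (y0 - rho) (y0 + rho)
     - RInt (fun t => Im (G (t, y0 + rho))) (x0 - rho) (x0 + rho) - RInt (fun t => Re (G (x0 - rho, t))) (y0 - rho) (y0 + rho)).
  { rewrite <- !Im_CRInt, <- !Re_CRInt by edge_integrable. unfold rect_integral.
    destruct (CRInt (fun t => G (t, y0 - rho)) (x0 - rho) (x0 + rho)), (CRInt (fun t => G (x0 + rho, t)) (y0 - rho) (y0 + rho)),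
      (CRInt (fun t => G (t, y0 + rho)) (x0 - rho) (x0 + rho)), (CRInt (fun t => G (x0 - rho, t)) (y0 - rho) (y0 + rho)).
    unfold Cminus, Cplus, Cmult, Copp, Ci, Im, Re; simpl. ring. }
  rewrite E in HIm. simpl in HIm.
  rewrite (RInt_ext (fun t => Im (G (t, y0 - rho))) (fun t => rho / ((t - x0) ^ 2 + rho ^ 2))),
    (RInt_ext (fun t => Re (G (x0 + rho, t))) (fun t => rho / ((t - y0) ^ 2 + rho ^ 2))),
    (RInt_ext (fun t => Im (G (t, y0 + rho))) (fun t => - (rho / ((t - x0) ^ 2 + rho ^ 2)))),
    (RInt_ext (fun t => Re (G (x0 - rho, t))) (fun t => - (rho / ((t - y0) ^ 2 + rho ^ 2)))) in HIm;
    try (intros t _; unfold G, cauchy_kernel, Cinv, Cminus, Cplus, Copp, Re, Im; simpl;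
         pose proof (Rle_0_sqr (t - x0)); pose proof (Rle_0_sqr (t - y0)); unfold Rsqr in *; field; nra).
  rewrite !(RInt_opp (V:=R_CompleteNormedModule)) in HIm.
  - pose proof (RInt_Poisson_pos x0 (x0 - rho) (x0 + rho) ltac:(lra)).
    pose proof (RInt_Poisson_pos y0 (y0 - rho) (y0 + rho) ltac:(lra)).
    change opp with Ropp in HIm. lra.
  all: apply (ex_RInt_continuous (V:=R_CompleteNormedModule)); intros; apply continuous_Poisson.
Qed.

End Square.

(* On a square around [z0], [f w] is the Cauchy integral
   [(int f(s) / (s - w) ds) / (int 1 / (s - z0) ds)], which can be
   differentiated twice in [w] under the integral sign. *)
Theorem C_Derive_derivable (f : C -> C) (D : C -> Prop) :
  (forall z, D z -> exists r, 0 < r /\ forall w, Cmod (Cminus w z) < r -> D w) ->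
  (forall z, D z -> exists l, C_is_derive f z l) ->
  forall z, D z -> exists l, C_is_derive (C_Derive f) z l.
Proof.
  intros Hopen Hhol [x0 y0] Hz0.
  destruct (Hopen _ Hz0) as [r [Hr HB]].
  set (rho := r / 4). assert (Hrho : 0 < rho) by (unfold rho; lra).
  assert (HD : forall x y, x0 - rho <= x <= x0 + rho -> y0 - rho <= y <= y0 + rho ->
                 exists l, C_is_derive f (x, y) l).
  { intros x y Hx Hy. apply Hhol, HB. rewrite Cminus_pair.
    eapply Rle_lt_trans; [apply Cmod_pair_le |]. unfold rho in *. unfold Rabs; repeat destruct Rcase_abs; lra. }
  assert (Hbf : C_continuous_on_rect_boundary f (x0 - rho) (x0 + rho) (y0 - rho) (y0 + rho)).
  { intros x y Hb. destruct (HD x y) as [l Hl]; [unfold on_rect_boundary in Hb; lra .. |].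
    exact (C_is_derive_continuous _ _ _ Hl). }
  set (k := rect_integral (fun s => cauchy_kernel s (x0, y0)) (x0 - rho) (x0 + rho) (y0 - rho) (y0 + rho)).
  assert (Hk : k <> RtoC 0) by now apply square_integral_cauchy_kernel_neq0.
  set (G1 := fun w => rect_integral (fun s => Cmult (f s) (cauchy_kernel s w)) (x0 - rho) (x0 + rho) (y0 - rho) (y0 + rho)).
  set (G2 := fun w => rect_integral (fun s => Cmult (f s) (cauchy_kernel_d1 s w)) (x0 - rho) (x0 + rho) (y0 - rho) (y0 + rho)).
  assert (Hrep : forall z, Rabs (fst z - x0) < rho / 2 /\ Rabs (snd z - y0) < rho / 2 ->
                   f z = Cmult (G1 z) (Cinv k)).
  { intros z Hz. unfold G1. rewrite square_integral_cauchy_formula by assumption.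
    rewrite square_integral_cauchy_kernel_const by assumption. fold k. field. exact Hk. }
  assert (Hder : forall z, Rabs (fst z - x0) < rho / 2 /\ Rabs (snd z - y0) < rho / 2 ->
                   C_Derive f z = Cmult (G2 z) (Cinv k)).
  { intros z Hz. apply C_Derive_eq. destruct (inner_square_open x0 y0 rho z Hz) as [rz [Hrz Hball]].
    apply C_is_derive_loc with (f := fun w => Cmult (G1 w) (Cinv k)) (r := rz); [exact Hrz | |].
    - intros w Hw. symmetry. now apply Hrep, Hball.
    - eapply C_is_derive_change.
      + apply C_is_derive_mult; [exact (square_integral_cauchy_kernel_derive x0 y0 rho Hrho f z Hbf Hz) | apply C_is_derive_const].
      + unfold G2. ring. }
  destruct (inner_square_open x0 y0 rho (x0, y0) (center_in_inner_square x0 y0 rho Hrho)) as [rz [Hrz Hball]].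
  eexists. apply C_is_derive_loc with (f := fun w => Cmult (G2 w) (Cinv k)) (r := rz); [exact Hrz | |].
  - intros w Hw. symmetry. now apply Hder, Hball.
  - apply C_is_derive_mult; [| apply C_is_derive_const].
    exact (square_integral_cauchy_kernel_d1_derive x0 y0 rho Hrho f (x0, y0) Hbf (center_in_inner_square x0 y0 rho Hrho)).
Qed.

(** * The Jacobian *)

Lemma C_is_derive_partial_x (F : C -> C) (x y : R) (l : C) : C_is_derive F (x, y) l ->
  @is_derive R_AbsRing C_R_NormedModule (fun t => F (t, y)) x l.
Proof.
  intros H. rewrite (point_horizontal x y) in H. apply C_is_derive_line in H.
  replace (Cmult l (RtoC 1)) with l in H by ring. eapply is_derive_ext; [| exact H]. intros t. cbv beta. now rewrite <- point_horizontal.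
Qed.

Lemma C_is_derive_partial_y (F : C -> C) (x y : R) (l : C) : C_is_derive F (x, y) l ->
  @is_derive R_AbsRing C_R_NormedModule (fun t => F (x, t)) y (Cmult l Ci).
Proof.
  intros H. rewrite (point_vertical x y) in H. apply C_is_derive_line in H.
  eapply is_derive_ext; [| exact H]. intros t. cbv beta. now rewrite <- point_vertical.
Qed.

Lemma is_derive_div_sum_sq (a1 a2 b : R -> R) (t da1 da2 db : R) :
  is_derive a1 t da1 -> is_derive a2 t da2 -> is_derive b t db -> a1 t ^ 2 + a2 t ^ 2 <> 0 ->
  is_derive (fun s => b s / (a1 s ^ 2 + a2 s ^ 2)) t
    ((db * (a1 t ^ 2 + a2 t ^ 2) - b t * (2 * a1 t * da1 + 2 * a2 t * da2)) / (a1 t ^ 2 + a2 t ^ 2) ^ 2).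
Proof.
  intros H1 H2 H3 Hn.
  assert (HD : is_derive (fun s => a1 s ^ 2 + a2 s ^ 2) t (INR 2 * da1 * a1 t ^ 1 + INR 2 * da2 * a2 t ^ 1))
    by (apply (is_derive_plus (K:=R_AbsRing) (V:=R_NormedModule)); apply is_derive_pow; assumption).
  eapply is_derive_ext; [intros s; reflexivity |].
  replace ((db * (a1 t ^ 2 + a2 t ^ 2) - b t * (2 * a1 t * da1 + 2 * a2 t * da2)) / (a1 t ^ 2 + a2 t ^ 2) ^ 2)
    with ((db * (a1 t ^ 2 + a2 t ^ 2) - b t * (INR 2 * da1 * a1 t ^ 1 + INR 2 * da2 * a2 t ^ 1)) / (a1 t ^ 2 + a2 t ^ 2) ^ 2)
    by (simpl; f_equal; ring).
  exact (is_derive_div b _ t db _ H3 HD Hn).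
Qed.

Lemma jacobian_Re_formula (h g g1 g2 : C -> C) (x y : R) :
  C_is_derive h (x, y) (Cinv (g (x, y))) -> C_is_derive g (x, y) (g1 (x, y)) ->
  C_is_derive g1 (x, y) (g2 (x, y)) -> g (x, y) <> RtoC 0 ->
  jacobian (fun x y => Re (h (x, y))) (fun x y => Re (g1 (x, y)) / (Cmod (g (x, y)) ^ 2)) x y
   = - Im (Cminus (Cmult (g (x, y)) (g2 (x, y))) (Cmult (g1 (x, y)) (g1 (x, y)))) / (Cmod (g (x, y)) ^ 2) ^ 2.
Proof.
  intros Hh Hg Hg1 Hn. unfold jacobian. cbv beta.
  assert (HN : 0 < Re (g (x, y)) ^ 2 + Im (g (x, y)) ^ 2)
    by (rewrite <- Cmod2_alt; now apply pow_lt, Cmod_gt_0).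
  replace (Derive (fun t => Re (h (t, y))) x) with (Re (Cinv (g (x, y))))
    by (symmetry; apply is_derive_unique, is_derive_Re, C_is_derive_partial_x, Hh).
  replace (Derive (fun t => Re (h (x, t))) y) with (Re (Cmult (Cinv (g (x, y))) Ci))
    by (symmetry; apply is_derive_unique, is_derive_Re, C_is_derive_partial_y, Hh).
  assert (Ex : is_derive (fun t => Re (g1 (t, y)) / Cmod (g (t, y)) ^ 2) x
     ((Re (g2 (x, y)) * (Re (g (x, y)) ^ 2 + Im (g (x, y)) ^ 2) - Re (g1 (x, y)) *
       (2 * Re (g (x, y)) * Re (g1 (x, y)) + 2 * Im (g (x, y)) * Im (g1 (x, y))))
       / (Re (g (x, y)) ^ 2 + Im (g (x, y)) ^ 2) ^ 2)).
  { apply is_derive_ext with (f := fun t => Re (g1 (t, y)) / (Re (g (t, y)) ^ 2 + Im (g (t, y)) ^ 2));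
      [intros t; now rewrite Cmod2_alt |].
    apply (is_derive_div_sum_sq (fun t => Re (g (t, y))) (fun t => Im (g (t, y))) (fun t => Re (g1 (t, y))));
      [apply is_derive_Re | apply is_derive_Im | apply is_derive_Re | lra];
      now apply C_is_derive_partial_x. }
  assert (Ey : is_derive (fun t => Re (g1 (x, t)) / Cmod (g (x, t)) ^ 2) y
     ((Re (Cmult (g2 (x, y)) Ci) * (Re (g (x, y)) ^ 2 + Im (g (x, y)) ^ 2) - Re (g1 (x, y)) *
       (2 * Re (g (x, y)) * Re (Cmult (g1 (x, y)) Ci) + 2 * Im (g (x, y)) * Im (Cmult (g1 (x, y)) Ci)))
       / (Re (g (x, y)) ^ 2 + Im (g (x, y)) ^ 2) ^ 2)).
  { apply is_derive_ext with (f := fun t => Re (g1 (x, t)) / (Re (g (x, t)) ^ 2 + Im (g (x, t)) ^ 2));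
      [intros t; now rewrite Cmod2_alt |].
    apply (is_derive_div_sum_sq (fun t => Re (g (x, t))) (fun t => Im (g (x, t))) (fun t => Re (g1 (x, t))));
      [apply is_derive_Re | apply is_derive_Im | apply is_derive_Re | lra];
      now apply C_is_derive_partial_y. }
  match type of Ex with is_derive ?f _ ?l => replace (Derive (fun t => Re (g1 (t, y)) / Cmod (g (t, y)) ^ 2) x) with l
    by (symmetry; exact (is_derive_unique _ _ _ Ex)) end.
  match type of Ey with is_derive ?f _ ?l => replace (Derive (fun t => Re (g1 (x, t)) / Cmod (g (x, t)) ^ 2) y) with l
    by (symmetry; exact (is_derive_unique _ _ _ Ey)) end.
  rewrite Cmod2_alt.
  destruct (g (x, y)) as [p q], (g1 (x, y)) as [r s], (g2 (x, y)) as [u v].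
  unfold Re, Im in *. simpl in *. field. lra.
Qed.

Lemma open_C_Cmod_ball (D : C -> Prop) : @open C_UniformSpace D ->
  forall z, D z -> exists r, 0 < r /\ forall w, Cmod (Cminus w z) < r -> D w.
Proof.
  intros H z Hz. destruct (H z Hz) as [eps He]. exists eps. split; [apply cond_pos |].
  intros w Hw. apply He. destruct (Rabs_coord_le_Cmod w z) as [c1 c2].
  split; [change (Rabs (fst w - fst z) < eps) | change (Rabs (snd w - snd z) < eps)]; lra.
Qed.

Lemma open_C_of_Cmod_ball (P : C -> Prop) :
  (forall z, P z -> exists r, 0 < r /\ forall w, Cmod (Cminus w z) < r -> P w) -> @open C_UniformSpace P.
Proof.
  intros H z Hz. destruct (H z Hz) as [r [Hr Hb]].
  exists (mkposreal (r / 2) ltac:(lra)). intros w [H1 H2]. apply Hb.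
  change (Rabs (fst w - fst z) < r / 2) in H1. change (Rabs (snd w - snd z) < r / 2) in H2.
  destruct w as [w1 w2], z as [z1 z2]. simpl in *. rewrite Cminus_pair.
  eapply Rle_lt_trans; [apply Cmod_pair_le | lra].
Qed.

(* The partial derivatives [l] (in [x]) and [l * i] (in [y]) of the
   real-valued [K] are both real. *)
Lemma C_is_derive_real_valued (K : C -> C) (x y r : R) (l : C) : C_is_derive K (x, y) l -> 0 < r ->
  (forall w, Cmod (Cminus w (x, y)) < r -> Im (K w) = 0) -> l = RtoC 0.
Proof.
  intros HD Hr H0.
  assert (Hloc : forall (u : R -> C) t0, (forall t, Rabs (t - t0) < r -> Cmod (Cminus (u t) (x, y)) < r) ->
            locally t0 (fun t => Im (K (u t)) = 0)).
  { intros u t0 Hu. exists (mkposreal r Hr). intros t Ht. apply H0, Hu, Ht. }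
  assert (Hx : Im l = 0).
  { pose proof (is_derive_Im _ _ _ (C_is_derive_partial_x K x y l HD)) as H.
    apply (is_derive_ext_loc _ (fun _ => 0)) in H.
    - rewrite <- (is_derive_unique _ _ _ H). apply Derive_const.
    - apply (Hloc (fun t => (t, y))). intros t Ht. rewrite Cminus_pair.
      eapply Rle_lt_trans; [apply Cmod_pair_le |]. rewrite Rminus_diag, Rabs_R0. lra. }
  assert (Hy : Re l = 0).
  { pose proof (is_derive_Im _ _ _ (C_is_derive_partial_y K x y l HD)) as H.
    apply (is_derive_ext_loc _ (fun _ => 0)) in H.
    - apply is_derive_unique in H. rewrite Derive_const in H.
      destruct l as [l1 l2]. unfold Cmult, Ci, Im, Re in *. simpl in *. lra.
    - apply (Hloc (fun t => (x, t))). intros t Ht. rewrite Cminus_pair.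
      eapply Rle_lt_trans; [apply Cmod_pair_le |]. rewrite Rminus_diag, Rabs_R0. lra. }
  destruct l as [l1 l2]. unfold Re, Im in *. simpl in *. now subst.
Qed.

Lemma C_is_derive_zero_ball_const (K : C -> C) (z : C) (r : R) :
  (forall w, Cmod (Cminus w z) < r -> C_is_derive K w (RtoC 0)) ->
  forall w, Cmod (Cminus w z) < r -> K w = K z.
Proof.
  intros HD w Hw.
  pose proof (C_is_derive_segment_const K z (Cminus w z)) as H.
  replace (Cplus z (Cminus w z)) with w in H by ring.
  apply H. intros t Ht. apply HD.
  replace (Cminus (Cplus z (Cmult (RtoC t) (Cminus w z))) z) with (Cmult (RtoC t) (Cminus w z)) by ring.
  rewrite Cmod_mult, Cmod_R, Rabs_pos_eq by lra. pose proof (Cmod_ge_0 (Cminus w z)). nra.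
Qed.

(* The points near which [K] equals [K z1] and those near which it differs
   form two disjoint open sets covering [D]. *)
Lemma C_is_derive_zero_connected_const (D : C -> Prop) (K : C -> C) : connected_set D ->
  (forall z, D z -> exists r, 0 < r /\ forall w, Cmod (Cminus w z) < r -> D w) ->
  (forall z, D z -> C_is_derive K z (RtoC 0)) ->
  forall z1 z2, D z1 -> D z2 -> K z2 = K z1.
Proof.
  intros Hc Ho HD z1 z2 H1 H2.
  set (U := fun z => exists r, 0 < r /\ forall w, Cmod (Cminus w z) < r -> D w /\ K w = K z1).
  set (V := fun z => exists r, 0 < r /\ forall w, Cmod (Cminus w z) < r -> D w /\ K w <> K z1).
  assert (Hloc : forall z, D z -> exists r, 0 < r /\ forall w, Cmod (Cminus w z) < r -> D w /\ K w = K z).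
  { intros z Hz. destruct (Ho z Hz) as [r [Hr Hb]]. exists r. split; [exact Hr |].
    intros w Hw. split; [now apply Hb |]. apply (C_is_derive_zero_ball_const K z r); [| exact Hw].
    intros u Hu. now apply HD, Hb. }
  assert (Hhalf : forall z w w' r, Cmod (Cminus w z) < r / 2 -> Cmod (Cminus w' w) < r / 2 ->
                    Cmod (Cminus w' z) < r).
  { intros z w w' r Hw Hw'. replace (Cminus w' z) with (Cplus (Cminus w' w) (Cminus w z)) by ring.
    eapply Rle_lt_trans; [apply Cmod_triangle | lra]. }
  assert (HU : @open C_UniformSpace U).
  { apply open_C_of_Cmod_ball. intros z [r [Hr Hb]]. exists (r / 2). split; [lra |]. intros w Hw.
    exists (r / 2). split; [lra |]. intros w' Hw'. apply Hb. eapply Hhalf; eassumption. }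
  assert (HV : @open C_UniformSpace V).
  { apply open_C_of_Cmod_ball. intros z [r [Hr Hb]]. exists (r / 2). split; [lra |]. intros w Hw.
    exists (r / 2). split; [lra |]. intros w' Hw'. apply Hb. eapply Hhalf; eassumption. }
  assert (Hcov : forall z, D z -> U z \/ V z).
  { intros z Hz. destruct (Hloc z Hz) as [r [Hr Hb]].
    destruct (excluded_middle_informative (K z = K z1)) as [E | E]; [left | right];
      exists r; split; try exact Hr; intros w Hw; destruct (Hb w Hw); split; congruence. }
  assert (Hzz : forall z, Cmod (Cminus z z) = 0) by (intros; unfold Cminus; now rewrite Cplus_opp_r, Cmod_0).
  destruct (Hcov z2 H2) as [[r [Hr Hb]] | HV2].
  - apply (Hb z2). now rewrite Hzz.
  - exfalso. destruct (Hc U V HU HV Hcov) as [z [Hz [[r1 [Hr1 Hb1]] [r2 [Hr2 Hb2]]]]].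
    + exists z1. split; [exact H1 |]. destruct (Hloc z1 H1) as [r [Hr Hb]]. now exists r.
    + now exists z2.
    + apply (proj2 (Hb2 z ltac:(now rewrite Hzz))), (Hb1 z). now rewrite Hzz.
Qed.

Lemma holomorphic_real_valued_const (D : C -> Prop) (K : C -> C) : is_domain D ->
  (forall z, D z -> exists l, C_is_derive K z l) -> (forall z, D z -> Im (K z) = 0) ->
  exists c : R, forall w, D w -> K w = RtoC c.
Proof.
  intros [Hop [Hconn [z0 Hz0]]] HK HIm.
  pose proof (open_C_Cmod_ball D Hop) as Hball.
  assert (HK0 : forall z, D z -> C_is_derive K z (RtoC 0)).
  { intros [x y] Hz. destruct (HK _ Hz) as [l Hl]. destruct (Hball _ Hz) as [r [Hr Hb]].
    replace (RtoC 0) with l; [exact Hl |].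
    apply (C_is_derive_real_valued K x y r l Hl Hr). intros w Hw. now apply HIm, Hb. }
  exists (Re (K z0)). intros w Hw.
  rewrite (C_is_derive_zero_connected_const D K Hconn Hball HK0 z0 w Hz0 Hw).
  specialize (HIm z0 Hz0). destruct (K z0) as [k1 k2]. unfold Re, Im, RtoC in *. simpl in *. now subst.
Qed.

Lemma Cinv_neq_0 (a : C) : a <> RtoC 0 -> Cinv a <> RtoC 0.
Proof. intros H E. apply H. replace a with (Cmult a (Cmult a (Cinv a))) by (field; exact H). rewrite E. ring. Qed.

Lemma C_Derive_correct_ex (f : C -> C) (z : C) :
  (exists l, C_is_derive f z l) -> C_is_derive f z (C_Derive f z).
Proof. intros [l Hl]. exact (C_Derive_correct f z l Hl). Qed.

Lemma holomorphic_twice_derivable (f : C -> C) (D : C -> Prop) :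
  (forall z, D z -> exists r, 0 < r /\ forall w, Cmod (Cminus w z) < r -> D w) ->
  (forall z, D z -> exists l, C_is_derive f z l) ->
  forall z, D z -> C_is_derive f z (C_Derive f z) /\
    C_is_derive (C_Derive f) z (C_Derive (C_Derive f) z) /\
    exists l, C_is_derive (C_Derive (C_Derive f)) z l.
Proof.
  intros Hop Hf z Hz.
  pose proof (C_Derive_derivable f D Hop Hf) as Hf'.
  pose proof (C_Derive_derivable (C_Derive f) D Hop Hf') as Hf''.
  split; [| split]; [now apply C_Derive_correct_ex, Hf | now apply C_Derive_correct_ex, Hf' | now apply Hf''].
Qed.

Theorem lemma2 (D : C -> Prop) (h : C -> C)
  (hD : is_domain D)
  (hhol : holomorphic_on D h)
  (hnz : forall z, D z -> C_Derive h z <> RtoC 0) :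
  let g : C -> C := fun w => Cinv (C_Derive h w) in
  let g' : C -> C := C_Derive g in
  let g'' : C -> C := C_Derive g' in
  let phi : R -> R -> R := fun x y => Re (h (x, y)) in
  let psi : R -> R -> R :=
    fun x y => Re (g' (x, y)) / (Cmod (g (x, y)) ^ 2) in
  (forall x y : R, D (x, y) -> jacobian phi psi x y = 0)
  <->
  (exists c : R, forall w : C, D w -> Cminus (Cmult (g w) (g'' w)) (Cmult (g' w) (g' w)) = RtoC c).
Proof.
  intros g g' g'' phi psi.
  pose proof (open_C_Cmod_ball D (proj1 hD)) as Hball.
  assert (Hgnz : forall z, D z -> g z <> RtoC 0) by (intros z Hz; now apply Cinv_neq_0, hnz).
  assert (Hg : forall z, D z -> exists l, C_is_derive g z l).
  { intros z Hz. destruct (C_Derive_derivable h D Hball hhol z Hz) as [l Hl].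
    eexists. apply C_is_derive_inv; [exact (C_Derive_correct _ _ _ Hl) | now apply hnz]. }
  set (K := fun w => Cminus (Cmult (g w) (g'' w)) (Cmult (g' w) (g' w))).
  assert (HJ : forall x y, D (x, y) -> jacobian phi psi x y = - Im (K (x, y)) / (Cmod (g (x, y)) ^ 2) ^ 2).
  { intros x y Hxy. destruct (holomorphic_twice_derivable g D Hball Hg (x, y) Hxy) as (Hg1 & Hg2 & _).
    apply jacobian_Re_formula; [| exact Hg1 | exact Hg2 | now apply Hgnz].
    unfold g. replace (Cinv (Cinv (C_Derive h (x, y)))) with (C_Derive h (x, y)) by (field; now apply hnz).
    now apply C_Derive_correct_ex, hhol. }
  split.
  - intros HJ0. apply (holomorphic_real_valued_const D K hD).
    + intros z Hz. destruct (holomorphic_twice_derivable g D Hball Hg z Hz) as (Hg1 & Hg2 & [l Hg3]).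
      eexists. apply C_is_derive_minus; apply C_is_derive_mult; eassumption.
    + intros [x y] Hxy. specialize (HJ0 x y Hxy). rewrite HJ in HJ0 by exact Hxy.
      assert (Cmod (g (x, y)) <> 0) by (apply Rgt_not_eq, Cmod_gt_0, Hgnz, Hxy).
      replace (Im (K (x, y))) with (- (- Im (K (x, y)) / (Cmod (g (x, y)) ^ 2) ^ 2) * (Cmod (g (x, y)) ^ 2) ^ 2)
        by (field; assumption).
      rewrite HJ0. ring.
  - intros [c Hc] x y Hxy. rewrite HJ by exact Hxy. unfold K. rewrite Hc by exact Hxy. simpl. unfold Rdiv. ring.
Qed.
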